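(* With $0<q<1$, $\sigma\in\mathbb{R}$ and $v_\lambda=\sum_{n\ge0}\phi_n(\lambda)e_n$ as in the context, for every $x\in\mathbb{Z}_+$: $$\|v_{q^{2\sigma+2x}}\|^2=\sum_{n=0}^\infty\frac{q^{n(n-1)}q^{-2\sigma n}}{(q^2;q^2)_n}\left({}_2\varphi_1\!\left({q^{-2x},q^{-2n}\atop 0};q^2,-q^{2+2\sigma+2x}\right)\right)^2 = q^{-2x}(q^2;q^2)_x(-q^{2\sigma+2};q^2)_x(-q^{-2\sigma};q^2)_\infty,$$ and $\|v_{-q^{2x}}\|^2$ is given by the same expression with $\sigma$ replaced by $-\sigma$, i.e. equals $q^{-2x}(q^2;q^2)_x(-q^{2-2\sigma};q^2)_x(-q^{2\sigma};q^2)_\infty$. Moreover, for $\lambda\in\mathbb{C}\setminus\{0\}$ not of the form $-q^{2x}$ or $q^{2\sigma+2x}$ ($x\in\mathbb{Z}_+$), $v_\lambda\notin\ell^2(\mathbb{Z}_+)$.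
   Context: $(a;q)_n=\prod_{j=0}^{n-1}(1-aq^j)$, $(a;q)_\infty=\prod_{j\ge0}(1-aq^j)$; ${}_2\varphi_1\!\left({a,b\atop c};q,z\right)=\sum_{k\ge0}\frac{(a;q)_k(b;q)_k}{(c;q)_k(q;q)_k}z^k$ (terminating here). $\{e_n\}$ is the standard orthonormal basis of $\ell^2(\mathbb{Z}_+)$, $\phi_n(\lambda)= i^n q^{-\sigma n} q^{-\frac12 n(n-1)} (q^2;q^2)_n^{-1/2}\hat P_n(\lambda;0,0,q^{2\sigma},1;q^2)$, where the monic polynomials $\hat P_n(x;0,0,c,d;q)$ are defined by $\hat P_{-1}=0$, $\hat P_0=1$, $x\hat P_n=\hat P_{n+1}+q^n(c-d)\hat P_n+q^{n-1}cd(1-q^n)\hat P_{n-1}$; equivalently $\hat P_n(x;0,0,c,d;q)=d^n q^{\frac12 n(n-1)}\sum_{k=0}^n \frac{(q^{-n};q)_k (c/x;q)_k}{(q;q)_k}(-qx/d)^k$. *)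

From Stdlib Require Import Reals.
From Coquelicot Require Import Coquelicot.
Open Scope R_scope.

Fixpoint qpoch (a q : R) (n : nat) : R :=
  match n with
  | O => 1
  | S m => qpoch a q m * (1 - a * q ^ m)
  end.

Definition qpoch_inf (a q : R) : R := real (Lim_seq (fun n => qpoch a q n)).

(* terminating 2phi1(a, q^{-N}; c; q, z) = sum_{k=0}^{N} (a;q)_k (b;q)_k / ((c;q)_k (q;q)_k) z^k;
   with b = q^{-N} all terms with k > N vanish, so summing up to N is the full series *)
Definition phi21_term (a b c q z : R) (k : nat) : R :=
  qpoch a q k * qpoch b q k / (qpoch c q k * qpoch q q k) * z ^ k.
Definition phi21_trunc (a b c q z : R) (N : nat) : R :=
  sum_f_R0 (phi21_term a b c q z) N.

Fixpoint Cpown (z : C) (n : nat) : C :=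
  match n with
  | O => RtoC 1
  | S m => Cmult (Cpown z m) z
  end.

(* monic polynomials hatP_n(x;0,0,c,d;q) by the three-term recurrence
   x P_n = P_{n+1} + q^n (c-d) P_n + q^{n-1} c d (1-q^n) P_{n-1}, P_{-1}=0, P_0=1.
   hatP_pair c d q x n = (P_n(x), P_{n+1}(x)). *)
Fixpoint hatP_pair (c d q : R) (x : C) (n : nat) : C * C :=
  match n with
  | O => (RtoC 1, Cminus x (RtoC (c - d)))
  | S m =>
      let (p_m, p_n) := hatP_pair c d q x m in
      (p_n, Cminus (Cmult (Cminus x (RtoC (q ^ (S m) * (c - d)))) p_n)
                   (Cmult (RtoC (q ^ m * c * d * (1 - q ^ (S m)))) p_m))
  end.
Definition hatP (c d q : R) (n : nat) (x : C) : C := fst (hatP_pair c d q x n).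

Definition phi_n (q sigma : R) (n : nat) (lam : C) : C :=
  Cmult (Cmult (Cpown Ci n)
     (RtoC (Rpower q (- sigma * INR n) * Rpower q (- (INR n * (INR n - 1)) / 2)
            / sqrt (qpoch (q ^ 2) (q ^ 2) n))))
     (hatP (Rpower q (2 * sigma)) 1 (q ^ 2) n lam).

Definition vnorm2_term (q sigma : R) (lam : C) (n : nat) : R :=
  (Cmod (phi_n q sigma n lam)) ^ 2.

Definition v_in_l2 (q sigma : R) (lam : C) : Prop := ex_series (vnorm2_term q sigma lam).

(* Put Q = q^2 and c = q^(2 sigma). Up to a unimodular factor, phi_n(lambda) is hatP_n(lambda) / sqrt h_n
   with h_n = c^n Q^(n(n-1)/2) (Q;Q)_n, and the recurrence is solved by the explicit formula
     hatP_n(x) = sum_j [n, j]_Q Q^(j(j-1)/2) (x - c)(x - cQ)...(x - cQ^(n-j-1)).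
   At a mass point x = c Q^y this is Q^(n(n-1)/2) times a terminating 2phi1, a q-Charlier polynomial
   f_n, so that ||v||^2 = sum_n w_n f_n^2 with w_n = Q^(n(n-1)/2) / (c^n (Q;Q)_n).  Expanding f_n in the
   powers Q^(-jn), j <= y, and summing against w_n by Euler's identity
   (-t;Q)_oo = sum_j Q^(j(j-1)/2) t^j / (Q;Q)_j, every moment with j < y vanishes and the closed form
   remains.  The points -Q^y reduce to this case through hatP_n(-x; c) = (-c)^n hatP_n(x/c; 1/c).
   For non-real lambda, the Christoffel-Darboux identity expresses Im(lambda) times the partial sums of
   ||v||^2 by a Wronskian of two consecutive terms, which would tend to 0 if v were square summable.
   For real lambda off the spectrum, Tannery's theorem gives
   hatP_n(lambda) / lambda^n -> (-1/lambda;Q)_oo (c/lambda;Q)_oo <> 0, and the terms of ||v||^2 blow up. *)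

From Stdlib Require Import Reals Lra Lia Psatz.
From Coquelicot Require Import Coquelicot.
Open Scope R_scope.

Lemma pow_le_1 x n : 0 <= x <= 1 -> x ^ n <= 1.
Proof. intros H. rewrite <- (pow1 n). apply pow_incr. lra. Qed.

Lemma pow_inv_mul_pow Q n : Q <> 0 -> (/ Q) ^ n * Q ^ n = 1.
Proof. intros H. rewrite <- Rpow_mult_distr, Rinv_l by auto. apply pow1. Qed.

Lemma neg1_pow_sqr k : (-1) ^ k * (-1) ^ k = 1.
Proof. rewrite <- Rpow_mult_distr. replace (-1 * -1) with 1 by ring. apply pow1. Qed.

Lemma sum_f_R0_succ_l f n : sum_f_R0 f (S n) = f O + sum_f_R0 (fun j => f (S j)) n.
Proof. rewrite decomp_sum by lia. reflexivity. Qed.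

Lemma sum_f_R0_scal_l a f n : sum_f_R0 (fun j => a * f j) n = a * sum_f_R0 f n.
Proof. induction n; simpl; [reflexivity|]. rewrite IHn. ring. Qed.

Lemma sum_f_R0_rev f n : sum_f_R0 f n = sum_f_R0 (fun k => f (n - k)%nat) n.
Proof.
  revert f; induction n; intros f; [reflexivity|].
  rewrite sum_f_R0_succ_l, (IHn (fun i => f (S i))), tech5, Nat.sub_diag, Rplus_comm.
  f_equal. apply sum_eq. intros i Hi. f_equal. lia.
Qed.

Lemma sum_f_R0_zero f n : (forall k, (k <= n)%nat -> f k = 0) -> sum_f_R0 f n = 0.
Proof.
  induction n; intros H; simpl; [apply H; lia|].
  rewrite IHn, H by (lia || intros; apply H; lia). ring.
Qed.

Lemma sum_f_R0_last F n : (forall j, (j < n)%nat -> F j = 0) -> sum_f_R0 F n = F n.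
Proof.
  intros H. destruct n; [reflexivity|].
  rewrite tech5, sum_f_R0_zero by (intros; apply H; lia). ring.
Qed.

Lemma sum_f_R0_extend f n m : (n <= m)%nat -> (forall k, (n < k)%nat -> f k = 0) ->
  sum_f_R0 f m = sum_f_R0 f n.
Proof.
  intros Hnm H. induction m.
  - replace n with 0%nat by lia. reflexivity.
  - destruct (Nat.eq_dec n (S m)) as [->|Hne]; [reflexivity|].
    rewrite tech5, IHm, H by lia. ring.
Qed.

Lemma sum_f_R0_swap (F : nat -> nat -> R) n m :
  sum_f_R0 (fun k => sum_f_R0 (fun j => F k j) m) n =
  sum_f_R0 (fun j => sum_f_R0 (fun k => F k j) n) m.
Proof. induction n; simpl; [reflexivity|]. rewrite IHn, <- sum_plus. reflexivity. Qed.

(** * q-Pochhammer symbols and q-binomial coefficients *)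

(* [qtri Q j = Q ^ (j (j - 1) / 2)] *)
Fixpoint qtri (Q : R) (j : nat) : R :=
  match j with O => 1 | S m => qtri Q m * Q ^ m end.

Fixpoint qbin (Q : R) (n j : nat) : R :=
  match n, j with
  | _, O => 1
  | O, S _ => 0
  | S n', S j' => qbin Q n' (S j') + Q ^ (n' - j') * qbin Q n' j'
  end.

Lemma qtri_pos Q k : 0 < Q -> 0 < qtri Q k.
Proof. intros H; induction k; simpl; [lra|]. apply Rmult_lt_0_compat; auto. apply pow_lt; auto. Qed.

Lemma qtri_add Q a b : qtri Q (a + b) = qtri Q a * qtri Q b * Q ^ (a * b).
Proof.
  induction b.
  - rewrite Nat.add_0_r, Nat.mul_0_r. simpl. ring.
  - rewrite Nat.add_succ_r. simpl qtri. rewrite IHb.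
    replace (a * S b)%nat with (a * b + a)%nat by lia.
    rewrite !pow_add. ring.
Qed.

Lemma qtri_sqr Q k : qtri Q k * qtri Q k * Q ^ k = Q ^ (k * k).
Proof.
  induction k; simpl qtri; [simpl; ring|].
  replace (S k * S k)%nat with (k * k + (k + k + 1))%nat by lia.
  rewrite pow_add, <- IHk, !pow_add. simpl. ring.
Qed.

Lemma qtri_pow2 q n : qtri (q ^ 2) n = q ^ (n * (n - 1)).
Proof.
  induction n; cbn [qtri]; [reflexivity|].
  rewrite IHn, <- pow_mult, <- pow_add. f_equal. destruct n; simpl; lia.
Qed.

Lemma qpochS a Q n : qpoch a Q (S n) = qpoch a Q n * (1 - a * Q ^ n).
Proof. reflexivity. Qed.

Lemma qpochS_l v Q n : qpoch v Q (S n) = (1 - v) * qpoch (v * Q) Q n.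
Proof.
  induction n.
  - simpl. ring.
  - rewrite qpochS, IHn, qpochS. simpl. ring.
Qed.

Lemma qpoch_add v Q y N : qpoch v Q (y + N) = qpoch v Q y * qpoch (v * Q ^ y) Q N.
Proof.
  induction N.
  - rewrite Nat.add_0_r. simpl. ring.
  - rewrite Nat.add_succ_r, !qpochS, IHN, pow_add. ring.
Qed.

Lemma qpoch_0_l Q k : qpoch 0 Q k = 1.
Proof. induction k; simpl; [reflexivity|]. rewrite IHk. ring. Qed.

Lemma qpoch_neq0 v Q y : (forall i, 1 - v * Q ^ i <> 0) -> qpoch v Q y <> 0.
Proof.
  intros H. induction y; simpl; [lra|]. apply Rmult_integral_contrapositive_currified; auto.
Qed.

Lemma qpochQ_pos Q n : 0 < Q < 1 -> 0 < qpoch Q Q n.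
Proof.
  intros HQ; induction n; simpl; [lra|].
  apply Rmult_lt_0_compat; auto.
  assert (0 < Q ^ n <= 1) by (split; [apply pow_lt; lra| apply pow_le_1; lra]). nra.
Qed.

Lemma qpochQ_decr Q n m : 0 < Q < 1 -> (n <= m)%nat -> qpoch Q Q m <= qpoch Q Q n.
Proof.
  intros HQ H. induction H; [lra|].
  rewrite qpochS. assert (P := qpochQ_pos Q m HQ).
  assert (0 < Q ^ m <= 1) by (split; [apply pow_lt; lra| apply pow_le_1; lra]).
  assert (0 < Q * Q ^ m <= 1) by (split; nra). nra.
Qed.

Lemma qpoch_inv_pow_0 Q y k : 0 < Q -> (y < k)%nat -> qpoch ((/ Q) ^ y) Q k = 0.
Proof.
  intros HQ H. induction k; [lia|].
  destruct (Nat.eq_dec y k) as [->|Hne].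
  - rewrite qpochS, pow_inv_mul_pow by lra. ring.
  - rewrite qpochS, IHk by lia. ring.
Qed.

Lemma qpoch_inv_pow Q : 0 < Q -> forall n k, (k <= n)%nat ->
  qpoch ((/ Q) ^ n) Q k * qpoch Q Q (n - k) = (-1) ^ k * qtri Q k * ((/ Q) ^ n) ^ k * qpoch Q Q n.
Proof.
  intros HQ n k. induction k; intros Hk.
  - simpl. rewrite Nat.sub_0_r. ring.
  - assert (IH := IHk ltac:(lia)).
    replace (n - k)%nat with (S (n - S k)) in IH by lia.
    rewrite qpochS in IH |- *.
    set (p := / Q) in *.
    assert (Hpq : p ^ n * Q ^ (n - S k) * Q ^ k * Q = 1).
    { rewrite <- (pow_inv_mul_pow Q n) by lra. fold p.
      replace (Q ^ n) with (Q ^ (n - S k) * Q ^ k * Q)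
        by (transitivity (Q ^ (n - S k + k + 1)); [rewrite !pow_add; simpl; ring | f_equal; lia]).
      ring. }
    replace (1 - p ^ n * Q ^ k) with ((1 - Q * Q ^ (n - S k)) * (- p ^ n * Q ^ k))
      by (transitivity (- p ^ n * Q ^ k + (p ^ n * Q ^ (n - S k) * Q ^ k * Q)); [ring| rewrite Hpq; ring]).
    transitivity (qpoch (p ^ n) Q k * (qpoch Q Q (n - S k) * (1 - Q * Q ^ (n - S k))) * (- p ^ n * Q ^ k));
      [ring|].
    rewrite IH. simpl qtri. simpl pow. ring.
Qed.

Lemma qbin_gt Q : forall n j, (n < j)%nat -> qbin Q n j = 0.
Proof.
  induction n; intros j H; destruct j; try lia; simpl; auto.
  rewrite !IHn by lia. ring.
Qed.

Lemma qbin_diag Q n : qbin Q n n = 1.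
Proof. induction n; simpl; auto. rewrite qbin_gt, Nat.sub_diag, IHn by lia. ring. Qed.

Lemma qbin_ge0 Q : 0 <= Q -> forall n j, 0 <= qbin Q n j.
Proof.
  intros HQ. induction n; destruct j; simpl; try lra.
  apply Rplus_le_le_0_compat; auto. apply Rmult_le_pos; auto. apply pow_le; auto.
Qed.

Lemma qbin_qpoch Q : forall n j, (j <= n)%nat ->
  qbin Q n j * qpoch Q Q j * qpoch Q Q (n - j) = qpoch Q Q n.
Proof.
  induction n; intros j Hj.
  - destruct j; [simpl; ring| lia].
  - destruct j; [simpl; ring|]. simpl qbin.
    destruct (Nat.eq_dec j n) as [->|Hne].
    + rewrite qbin_gt, Nat.sub_diag, qbin_diag by lia. simpl; rewrite ?Nat.sub_diag; simpl; ring.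
    + assert (E1 := IHn (S j) ltac:(lia)). assert (E2 := IHn j ltac:(lia)).
      replace (S n - S j)%nat with (S (n - S j)) by lia.
      replace (n - j)%nat with (S (n - S j)) in E2 |- * by lia.
      rewrite !qpochS in *.
      replace (Q * Q ^ n) with (Q ^ (S (n - S j)) * Q ^ (S j))
        by (rewrite <- pow_add; change (Q * Q ^ n) with (Q ^ (S n)); f_equal; lia).
      simpl pow.
      set (u := Q * Q ^ (n - S j)) in *. set (v := Q * Q ^ j) in *.
      transitivity ((qbin Q n (S j) * (qpoch Q Q j * (1 - v)) * qpoch Q Q (n - S j)) * (1 - u)
        + u * (1 - v) * (qbin Q n j * qpoch Q Q j * (qpoch Q Q (n - S j) * (1 - u)))); [ring|].
      rewrite E1, E2. ring.
Qed.

Lemma qbin_sym Q : 0 < Q < 1 -> forall n k, (k <= n)%nat -> qbin Q n (n - k) = qbin Q n k.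
Proof.
  intros HQ n k Hk.
  assert (E1 := qbin_qpoch Q n k Hk).
  assert (E2 := qbin_qpoch Q n (n - k) ltac:(lia)).
  replace (n - (n - k))%nat with k in E2 by lia.
  assert (P1 := qpochQ_pos Q k HQ). assert (P2 := qpochQ_pos Q (n - k) HQ).
  apply (Rmult_eq_reg_r (qpoch Q Q k * qpoch Q Q (n - k))); [|apply Rgt_not_eq; nra].
  transitivity (qpoch Q Q n); [rewrite <- E2; ring| rewrite <- E1; ring].
Qed.

Lemma qbin_succ Q : 0 < Q < 1 -> forall m k, (k <= m)%nat ->
  (1 - Q ^ (S m)) * qbin Q m k = (1 - Q ^ (S k)) * qbin Q (S m) (S k).
Proof.
  intros HQ m k Hk.
  assert (E1 := qbin_qpoch Q m k Hk).
  assert (E2 := qbin_qpoch Q (S m) (S k) ltac:(lia)).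
  replace (S m - S k)%nat with (m - k)%nat in E2 by lia.
  rewrite !qpochS in E2.
  assert (P1 := qpochQ_pos Q k HQ). assert (P2 := qpochQ_pos Q (m - k) HQ).
  apply (Rmult_eq_reg_r (qpoch Q Q k * qpoch Q Q (m - k))); [|apply Rgt_not_eq; nra].
  simpl pow. rewrite <- E1 in E2.
  transitivity (qbin Q m k * qpoch Q Q k * qpoch Q Q (m - k) * (1 - Q * Q ^ m)); [ring|].
  rewrite <- E2. ring.
Qed.

Lemma qpoch_qbin Q u n :
  qpoch u Q n = sum_f_R0 (fun j => qbin Q n j * qtri Q j * (- u) ^ j) n.
Proof.
  induction n; [simpl; ring|].
  set (A m j := qbin Q m j * qtri Q j).
  change (qpoch u Q n = sum_f_R0 (fun j => A n j * (- u) ^ j) n) in IHn.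
  change (qpoch u Q (S n) = sum_f_R0 (fun j => A (S n) j * (- u) ^ j) (S n)).
  assert (HA : forall j, (j <= n)%nat -> A (S n) (S j) = A n (S j) + Q ^ n * A n j).
  { intros j Hj. unfold A. simpl qbin. simpl qtri.
    replace (Q ^ n) with (Q ^ (n - j) * Q ^ j) by (rewrite <- pow_add; f_equal; lia). ring. }
  assert (Hlo : sum_f_R0 (fun j => A n j * (- u) ^ j) n
              = 1 + sum_f_R0 (fun j => A n (S j) * (- u) ^ S j) n).
  { transitivity (sum_f_R0 (fun j => A n j * (- u) ^ j) (S n)).
    - rewrite tech5. replace (A n (S n)) with 0 by (unfold A; rewrite qbin_gt by lia; ring). ring.
    - rewrite sum_f_R0_succ_l.
      replace (A n O * (- u) ^ 0) with 1 by (unfold A; destruct n; simpl; ring). reflexivity. }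
  rewrite sum_f_R0_succ_l, qpochS, IHn.
  replace (sum_f_R0 (fun j => A n j * (- u) ^ j) n * (1 - u * Q ^ n)) with
    (sum_f_R0 (fun j => A n j * (- u) ^ j) n + - u * Q ^ n * sum_f_R0 (fun j => A n j * (- u) ^ j) n)
    by ring.
  rewrite <- (sum_f_R0_scal_l (- u * Q ^ n)), Hlo.
  replace (A (S n) O * (- u) ^ 0) with 1 by (unfold A; simpl; ring).
  rewrite Rplus_assoc, <- sum_plus. f_equal.
  apply sum_eq. intros j Hj. rewrite HA by auto. simpl pow. ring.
Qed.

(** * An explicit formula for the polynomials *)

Lemma hatP_0 c d Q x : hatP c d Q 0 x = RtoC 1.
Proof. reflexivity. Qed.

Lemma hatP_1 c d Q x : hatP c d Q 1 x = Cminus x (RtoC (c - d)).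
Proof. reflexivity. Qed.

Lemma hatP_SS c d Q x m : hatP c d Q (S (S m)) x =
  Cminus (Cmult (Cminus x (RtoC (Q ^ S m * (c - d)))) (hatP c d Q (S m) x))
         (Cmult (RtoC (Q ^ m * c * d * (1 - Q ^ S m))) (hatP c d Q m x)).
Proof. unfold hatP. simpl. destruct (hatP_pair c d Q x m). reflexivity. Qed.

Lemma hatP_RtoC c d Q r (u : nat -> R) :
  u O = 1 -> u 1%nat = r - (c - d) ->
  (forall m, u (S (S m)) = (r - Q ^ S m * (c - d)) * u (S m) - Q ^ m * c * d * (1 - Q ^ S m) * u m) ->
  forall n, hatP c d Q n (RtoC r) = RtoC (u n).
Proof.
  intros H0 H1 Hrec.
  assert (H : forall n, hatP c d Q n (RtoC r) = RtoC (u n) /\ hatP c d Q (S n) (RtoC r) = RtoC (u (S n))).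
  { induction n as [|n [IH0 IH1]].
    - rewrite hatP_0, hatP_1, H0, H1. split; [reflexivity|].
      apply injective_projections; simpl; ring.
    - split; [exact IH1|]. rewrite hatP_SS, IH0, IH1, Hrec.
      apply injective_projections; simpl; ring. }
  intros n. apply H.
Qed.

Fixpoint Rfall (c Q r : R) (m : nat) : R :=
  match m with O => 1 | S k => Rfall c Q r k * (r - c * Q ^ k) end.

Definition qcoef (Q : R) (n j : nat) : R := qbin Q n j * qtri Q j.

Definition hatPr (c Q : R) (n : nat) (r : R) : R :=
  sum_f_R0 (fun j => qcoef Q n j * Rfall c Q r (n - j)) n.

Lemma hatPr_0 c Q r : hatPr c Q 0 r = 1.
Proof. unfold hatPr, qcoef. simpl. ring. Qed.

Lemma hatPr_1 c Q r : hatPr c Q 1 r = r - (c - 1).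
Proof. unfold hatPr, qcoef. simpl. ring. Qed.

Definition shift_seq (a : nat -> R) (j : nat) : R := match j with O => 0 | S k => a k end.

(* The three-term recurrence of [hatPr], coefficientwise. *)
Lemma qcoef_rec Q c m j : 0 < Q < 1 -> (j <= S (S m))%nat ->
  qcoef Q (S (S m)) j =
    qcoef Q (S m) j + shift_seq (fun i => qcoef Q (S m) i * (c * Q ^ (S m - i))) j
    - Q ^ S m * (c - 1) * shift_seq (qcoef Q (S m)) j
    - Q ^ m * c * (1 - Q ^ S m) * shift_seq (shift_seq (qcoef Q m)) j.
Proof.
  intros HQ Hj. unfold qcoef. destruct j as [|[|k]]; cbn [shift_seq].
  - simpl. ring.
  - simpl qbin. simpl qtri. rewrite Nat.sub_0_r. simpl pow. ring.
  - assert (Hr := qbin_succ Q HQ m k ltac:(lia)).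
    change (qbin Q (S (S m)) (S (S k))) with (qbin Q (S m) (S (S k)) + Q ^ (m - k) * qbin Q (S m) (S k)).
    replace (S m - S k)%nat with (m - k)%nat by lia.
    set (r := Q ^ (m - k)).
    assert (Hm : Q ^ m = r * Q ^ k) by (unfold r; rewrite <- pow_add; f_equal; lia).
    simpl qtri. simpl pow in *. rewrite Hm in *.
    set (Y := qbin Q (S m) (S k)) in *. set (Z := qbin Q m k) in *.
    transitivity (qbin Q (S m) (S (S k)) * (qtri Q k * Q ^ k * (Q * Q ^ k))
      + Y * qtri Q k * Q ^ k * c * r - Q * (r * Q ^ k) * (c - 1) * Y * qtri Q k * Q ^ k
      - r * Q ^ k * c * qtri Q k * ((1 - Q * (r * Q ^ k)) * Z)); [|ring].
    rewrite Hr. ring.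
Qed.

Section FallingSums.
Variables (c Q r : R).
Let F := Rfall c Q r.

Lemma sum_shift_seq_Rfall (a : nat -> R) n :
  sum_f_R0 (fun j => shift_seq a j * F (S n - j)) (S n) = sum_f_R0 (fun j => a j * F (n - j)) n.
Proof. rewrite sum_f_R0_succ_l. simpl shift_seq. rewrite Rmult_0_l, Rplus_0_l. reflexivity. Qed.

Lemma sum_Rfall_drop_last (a : nat -> R) n m : a (S n) = 0 ->
  sum_f_R0 (fun j => a j * F (m - j)) (S n) = sum_f_R0 (fun j => a j * F (m - j)) n.
Proof. intros H. rewrite tech5, H. ring. Qed.

Lemma mul_sum_Rfall (a : nat -> R) n :
  r * sum_f_R0 (fun j => a j * F (n - j)) n =
  sum_f_R0 (fun j => a j * F (S n - j)) n + sum_f_R0 (fun j => a j * (c * Q ^ (n - j)) * F (n - j)) n.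
Proof.
  rewrite <- sum_f_R0_scal_l, <- sum_plus. apply sum_eq. intros j Hj.
  replace (S n - j)%nat with (S (n - j)) by lia. unfold F. simpl Rfall. ring.
Qed.

End FallingSums.

(* Write all three sums over the basis [Rfall c Q r (N - j)], j <= N, and compare coefficients. *)
Lemma hatPr_rec c Q r m : 0 < Q < 1 ->
  hatPr c Q (S (S m)) r = (r - Q ^ S m * (c - 1)) * hatPr c Q (S m) r
                          - Q ^ m * c * 1 * (1 - Q ^ S m) * hatPr c Q m r.
Proof.
  intros HQ. unfold hatPr.
  set (N := S (S m)).
  set (B := fun j => qcoef Q (S m) j * (c * Q ^ (S m - j)%nat)).
  assert (Hmul : r * sum_f_R0 (fun j => qcoef Q (S m) j * Rfall c Q r (S m - j)%nat) (S m) =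
     sum_f_R0 (fun j => qcoef Q (S m) j * Rfall c Q r (N - j)%nat) N
     + sum_f_R0 (fun j => shift_seq B j * Rfall c Q r (N - j)%nat) N).
  { rewrite mul_sum_Rfall. unfold N. f_equal.
    - symmetry. apply sum_Rfall_drop_last. unfold qcoef. rewrite qbin_gt by lia. ring.
    - rewrite sum_shift_seq_Rfall. reflexivity. }
  assert (Hshift1 : sum_f_R0 (fun j => qcoef Q (S m) j * Rfall c Q r (S m - j)%nat) (S m) =
     sum_f_R0 (fun j => shift_seq (qcoef Q (S m)) j * Rfall c Q r (N - j)%nat) N).
  { unfold N. rewrite sum_shift_seq_Rfall. reflexivity. }
  assert (Hshift2 : sum_f_R0 (fun j => qcoef Q m j * Rfall c Q r (m - j)%nat) m =
     sum_f_R0 (fun j => shift_seq (shift_seq (qcoef Q m)) j * Rfall c Q r (N - j)%nat) N).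
  { unfold N. rewrite !sum_shift_seq_Rfall. reflexivity. }
  rewrite Rmult_minus_distr_r, Hmul, Hshift1, Hshift2. rewrite <- !sum_f_R0_scal_l.
  rewrite <- sum_plus, <- !minus_sum.
  apply sum_eq. intros j Hj. unfold N in Hj |- *. rewrite (qcoef_rec Q c m j HQ Hj). fold B. ring.
Qed.

Lemma hatP_hatPr c Q r n : 0 < Q < 1 -> hatP c 1 Q n (RtoC r) = RtoC (hatPr c Q n r).
Proof.
  intros HQ. apply (hatP_RtoC c 1 Q r (fun k => hatPr c Q k r)).
  - apply hatPr_0.
  - apply hatPr_1.
  - intros m. apply hatPr_rec; auto.
Qed.

(** * Values at the mass points *)

Lemma qtri_inv_pow Q n k : 0 < Q -> (k <= n)%nat ->
  qtri Q n * qtri Q k * ((/ Q) ^ n) ^ k * Q ^ k = qtri Q (n - k).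
Proof.
  intros HQ Hk.
  replace n with ((n - k) + k)%nat at 1 2 by lia.
  rewrite qtri_add, <- pow_mult.
  replace ((n - k + k) * k)%nat with ((n - k) * k + k * k)%nat by lia.
  rewrite pow_add.
  transitivity (qtri Q (n - k) * (qtri Q k * qtri Q k * Q ^ k)
    * ((/ Q) ^ ((n - k) * k) * Q ^ ((n - k) * k)) * (/ Q) ^ (k * k)); [ring|].
  rewrite qtri_sqr, !pow_inv_mul_pow by lra.
  transitivity (qtri Q (n - k) * ((/ Q) ^ (k * k) * Q ^ (k * k))); [ring|].
  rewrite pow_inv_mul_pow by lra. ring.
Qed.

Lemma Rfall_mass c Q y k : 0 < Q ->
  Rfall c Q (c * Q ^ y) k = (c * Q ^ y) ^ k * qpoch ((/ Q) ^ y) Q k.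
Proof.
  intros HQ. induction k; simpl; [ring|]. rewrite IHk.
  assert (H := pow_inv_mul_pow Q y ltac:(lra)).
  replace (c * Q ^ k) with (c * Q ^ y * ((/ Q) ^ y * Q ^ k))
    by (transitivity (c * ((/ Q) ^ y * Q ^ y) * Q ^ k); [ring| rewrite H; ring]).
  ring.
Qed.

Lemma Rfall_qpoch c Q r m : r <> 0 -> Rfall c Q r m = r ^ m * qpoch (c * / r) Q m.
Proof. intros H. induction m; simpl; [ring|]. rewrite IHm. field. auto. Qed.

Lemma hatPr_mass c Q y n : 0 < Q < 1 ->
  hatPr c Q n (c * Q ^ y) =
  qtri Q n * phi21_trunc ((/ Q) ^ y) ((/ Q) ^ n) 0 Q (- (Q * (c * Q ^ y))) n.
Proof.
  intros HQ. unfold hatPr, phi21_trunc. rewrite sum_f_R0_rev, <- sum_f_R0_scal_l.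
  apply sum_eq. intros k Hk.
  replace (n - (n - k))%nat with k by lia.
  unfold qcoef, phi21_term. rewrite qbin_sym, Rfall_mass, qpoch_0_l by (auto || lra).
  assert (E := qpoch_inv_pow Q (proj1 HQ) n k Hk).
  assert (E1 := qbin_qpoch Q n k Hk).
  assert (P1 := qpochQ_pos Q k HQ). assert (P2 := qpochQ_pos Q (n - k) HQ).
  rewrite <- (qtri_inv_pow Q n k) by (lra || auto).
  replace (qpoch ((/ Q) ^ n) Q k)
    with ((-1) ^ k * qtri Q k * ((/ Q) ^ n) ^ k * qpoch Q Q n / qpoch Q Q (n - k))
    by (rewrite <- E; field; lra).
  rewrite <- E1, !Rpow_mult_distr.
  replace ((- (Q * (c * Q ^ y))) ^ k) with ((-1) ^ k * (Q ^ k * (c ^ k * (Q ^ y) ^ k)))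
    by (rewrite <- !Rpow_mult_distr; f_equal; ring).
  match goal with |- ?X = _ => transitivity (X * ((-1) ^ k * (-1) ^ k)); [rewrite neg1_pow_sqr; ring|] end.
  field. lra.
Qed.

Lemma hatPr_opp c Q r : 0 < Q < 1 -> c <> 0 -> forall n,
  hatPr c Q n (- r) = (- c) ^ n * hatPr (/ c) Q n (r / c).
Proof.
  intros HQ Hc.
  assert (H : forall n, hatPr c Q n (- r) = (- c) ^ n * hatPr (/ c) Q n (r / c) /\
                        hatPr c Q (S n) (- r) = (- c) ^ (S n) * hatPr (/ c) Q (S n) (r / c)).
  { induction n as [|n [I0 I1]].
    - rewrite !hatPr_0, !hatPr_1. split; simpl; field; auto.
    - split; auto.
      rewrite (hatPr_rec c Q (- r) n HQ), (hatPr_rec (/ c) Q (r / c) n HQ), I0, I1.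
      simpl. field. auto. }
  intros n. apply H.
Qed.

Lemma is_lim_sum_f_R0_Series a : ex_series a -> is_lim_seq (fun n => sum_f_R0 a n) (Series a).
Proof.
  intros H. apply Series_correct in H.
  apply is_lim_seq_ext with (sum_n a). { intros n; apply sum_n_Reals. } exact H.
Qed.

Lemma Series_ge0 a : (forall n, 0 <= a n) -> ex_series a -> 0 <= Series a.
Proof.
  intros Hp H. assert (L := is_lim_sum_f_R0_Series a H).
  assert (H1 := is_lim_seq_le (fun _ => 0) (fun n => sum_f_R0 a n) 0 (Series a)
     (fun n => cond_pos_sum a n Hp) (is_lim_seq_const _) L). simpl in H1. auto.
Qed.

Lemma sum_f_R0_le_Series g : (forall n, 0 <= g n) -> ex_series g -> forall n, sum_f_R0 g n <= Series g.
Proof.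
  intros Hp Hex n.
  assert (0 <= Series (fun k => g (S n + k)%nat)).
  { apply Series_ge0; auto. apply (ex_series_incr_n g (S n)). auto. }
  rewrite (Series_incr_n g (S n)) by (auto || lia). change (pred (S n)) with n. lra.
Qed.

Lemma Series_sub_sum_f_R0 a K : ex_series a -> Series a - sum_f_R0 a K = Series (fun k => a (S K + k)%nat).
Proof. intros H. rewrite (Series_incr_n a (S K)) by (auto || lia). change (pred (S K)) with K. ring. Qed.

Lemma is_lim_Series_sub_sum_f_R0 g : ex_series g -> is_lim_seq (fun K => Series g - sum_f_R0 g K) 0.
Proof.
  intros H. replace 0 with (Series g - Series g) by ring.
  apply is_lim_seq_minus'; [apply is_lim_seq_const| apply is_lim_sum_f_R0_Series; auto].
Qed.

Lemma Rabs_sum_f_R0_sub_le f g K n : (K <= n)%nat -> (forall j, Rabs (f j) <= g j) ->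
  Rabs (sum_f_R0 f n - sum_f_R0 f K) <= sum_f_R0 g n - sum_f_R0 g K.
Proof.
  intros Hk Hb. induction Hk.
  - rewrite !Rminus_diag, Rabs_R0. lra.
  - simpl. replace (sum_f_R0 f m + f (S m) - sum_f_R0 f K) with ((sum_f_R0 f m - sum_f_R0 f K) + f (S m)) by ring.
    eapply Rle_trans; [apply Rabs_triang|]. specialize (Hb (S m)). lra.
Qed.

Lemma is_lim_sum_f_R0_pointwise (f : nat -> nat -> R) (F : nat -> R) :
  (forall j, is_lim_seq (fun n => f n j) (F j)) ->
  forall K, is_lim_seq (fun n => sum_f_R0 (f n) K) (sum_f_R0 F K).
Proof.
  intros H K. induction K; simpl; auto.
  apply is_lim_seq_plus'; auto.
Qed.

Lemma ex_series_Rabs_le (a b : nat -> R) :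
  (forall n, Rabs (a n) <= b n) -> ex_series b -> ex_series (fun n => Rabs (a n)).
Proof.
  intros H. apply (ex_series_le (fun n => Rabs (a n)) b). intros n.
  unfold norm; simpl. unfold abs; simpl. rewrite Rabs_Rabsolu. auto.
Qed.

Lemma Rabs_Series_sub_sum_f_R0_le (F g : nat -> R) K : (forall j, Rabs (F j) <= g j) -> ex_series g ->
  Rabs (Series F - sum_f_R0 F K) <= Series g - sum_f_R0 g K.
Proof.
  intros HF Hg.
  assert (Hgt : ex_series (fun k => g (S K + k)%nat)) by (apply (ex_series_incr_n g (S K)); auto).
  assert (ex_series F) by (apply ex_series_Rabs, (ex_series_Rabs_le _ g); auto).
  rewrite !Series_sub_sum_f_R0 by auto.
  eapply Rle_trans; [apply Series_Rabs, (ex_series_Rabs_le _ _ (fun k => HF (S K + k)%nat) Hgt)|].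
  apply Series_le; auto. intros k. split; [apply Rabs_pos| apply HF].
Qed.

Lemma tannery (f : nat -> nat -> R) (F g : nat -> R) :
  (forall j, is_lim_seq (fun n => f n j) (F j)) ->
  (forall n j, Rabs (f n j) <= g j) ->
  ex_series g ->
  is_lim_seq (fun n => sum_f_R0 (f n) n) (Series F).
Proof.
  intros Hl Hb Hg.
  assert (HF : forall j, Rabs (F j) <= g j).
  { intros j. assert (A := is_lim_seq_abs _ _ (Hl j)).
    assert (B := is_lim_seq_le _ (fun _ => g j) _ _ (fun n => Hb n j) A (is_lim_seq_const _)). simpl in B. auto. }
  assert (Hg0 : forall j, 0 <= g j) by (intros j; eapply Rle_trans; [apply Rabs_pos| apply HF]).
  apply is_lim_seq_spec. intros eps.
  assert (He3 : 0 < eps / 3) by (destruct eps; simpl; lra).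
  destruct (proj2 (is_lim_seq_spec _ _) (is_lim_Series_sub_sum_f_R0 g Hg) (mkposreal _ He3)) as [K HK].
  specialize (HK K (le_n K)). simpl in HK. rewrite Rminus_0_r, Rabs_right in HK.
  2:{ apply Rle_ge. assert (X := sum_f_R0_le_Series g Hg0 Hg K). lra. }
  destruct (proj2 (is_lim_seq_spec _ _) (is_lim_sum_f_R0_pointwise f F Hl K) (mkposreal _ He3)) as [N1 HN1].
  exists (max K N1). intros n Hn.
  specialize (HN1 n ltac:(lia)). simpl in HN1.
  assert (B1 := Rabs_sum_f_R0_sub_le (f n) g K n ltac:(lia) (Hb n)).
  assert (B2 := sum_f_R0_le_Series g Hg0 Hg n).
  assert (B3 := Rabs_Series_sub_sum_f_R0_le F g K HF Hg).
  replace (sum_f_R0 (f n) n - Series F) with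
    ((sum_f_R0 (f n) K - sum_f_R0 F K) + (sum_f_R0 (f n) n - sum_f_R0 (f n) K)
     - (Series F - sum_f_R0 F K)) by ring.
  eapply Rle_lt_trans; [apply Rabs_triang|]. rewrite Rabs_Ropp.
  eapply Rle_lt_trans; [apply Rplus_le_compat_r, Rabs_triang|].
  destruct eps as [e He]. simpl in *. lra.
Qed.

Lemma is_series_ext_R (u v : nat -> R) l : (forall n, u n = v n) -> is_series u l -> is_series v l.
Proof. apply is_series_ext. Qed.

Lemma is_series_sum_f_R0 (u : nat -> R) l : is_series u l <-> is_lim_seq (fun n => sum_f_R0 u n) l.
Proof.
  split; intros H.
  - apply is_lim_seq_ext with (sum_n u); [intros n; apply sum_n_Reals| exact H].
  - assert (H' : is_lim_seq (sum_n u) l)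
      by (apply is_lim_seq_ext with (fun n => sum_f_R0 u n); [intros n; symmetry; apply sum_n_Reals| exact H]).
    exact H'.
Qed.

Lemma is_series_shift_zero (u : nat -> R) l K : (forall n, (n < K)%nat -> u n = 0) ->
  is_series (fun m => u (K + m)%nat) l -> is_series u l.
Proof.
  intros Hz H. apply is_series_sum_f_R0 in H. apply is_series_sum_f_R0.
  apply (is_lim_seq_incr_n _ K).
  apply is_lim_seq_ext with (fun n => sum_f_R0 (fun m => u (K + m)%nat) n); auto.
  intros n. induction n.
  - simpl. rewrite Nat.add_0_r. symmetry. apply sum_f_R0_last. auto.
  - replace (S n + K)%nat with (S (n + K)) by lia. simpl. rewrite IHn. f_equal. f_equal. lia.
Qed.

Lemma is_series_scal_R (u : nat -> R) l k : is_series u l -> is_series (fun n => k * u n) (k * l).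
Proof. intros H. exact (is_series_scal_l (K := R_AbsRing) (V := R_NormedModule) k u l H). Qed.

Lemma is_series_plus_R (u v : nat -> R) l1 l2 :
  is_series u l1 -> is_series v l2 -> is_series (fun n => u n + v n) (l1 + l2).
Proof. intros H1 H2. exact (is_series_plus (K := R_AbsRing) (V := R_NormedModule) u v l1 l2 H1 H2). Qed.

Lemma is_series_sum_f_R0_comb (u : nat -> nat -> R) (l : nat -> R) (al : nat -> R) K :
  (forall k, (k <= K)%nat -> is_series (u k) (l k)) ->
  is_series (fun n => sum_f_R0 (fun k => al k * u k n) K) (sum_f_R0 (fun k => al k * l k) K).
Proof.
  induction K; intros H.
  - simpl. apply is_series_scal_R. apply H; lia.
  - simpl. apply is_series_plus_R.
    + apply IHK. intros; apply H; lia.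
    + apply is_series_scal_R. apply H; lia.
Qed.

(** * Bounds on q-Pochhammer symbols *)

Lemma exp_le_compat x y : x <= y -> exp x <= exp y.
Proof. intros [H|H]; [left; apply exp_increasing; auto| subst; lra]. Qed.

Lemma exp_le_1_sub x Q : 0 <= x <= Q -> Q < 1 -> exp (- x / (1 - Q)) <= 1 - x.
Proof.
  intros Hx HQ.
  assert (H1 : 0 < 1 - x) by lra.
  assert (H2 : exp (x / (1 - x)) >= 1 + x / (1 - x)) by (apply Rle_ge, exp_ineq1_le).
  assert (H3 : 1 + x / (1 - x) = / (1 - x)) by (field; lra).
  assert (H4 : exp (- x / (1 - Q)) <= exp (- (x / (1 - x)))).
  { apply exp_le_compat. assert (x / (1 - x) <= x / (1 - Q)).
    { unfold Rdiv. apply Rmult_le_compat_l; [lra|]. apply Rinv_le_contravar; lra. }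
    unfold Rdiv in *. lra. }
  rewrite exp_Ropp in H4.
  assert (/ exp (x / (1 - x)) <= 1 - x).
  { assert (Hh : / exp (x / (1 - x)) <= / / (1 - x))
      by (apply Rinv_le_contravar; [apply Rinv_0_lt_compat; lra| lra]).
    rewrite Rinv_inv in Hh. exact Hh. }
  lra.
Qed.

Lemma qpoch_ge_exp Q s : 0 < Q < 1 -> Rabs s <= Q -> forall N,
  exp (- Rabs s / (1 - Q) ^ 2) <= qpoch (- s) Q N.
Proof.
  intros HQ Hs N.
  assert (Hg : forall N, exp (- Rabs s * (1 - Q ^ N) / (1 - Q) ^ 2) <= qpoch (- s) Q N).
  { intros M; induction M as [|M IH].
    - simpl. replace (- Rabs s * (1 - 1) / ((1 - Q) * ((1 - Q) * 1))) with 0 by (field; lra).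
      rewrite exp_0. lra.
    - rewrite qpochS.
      assert (HQn : 0 < Q ^ M <= 1) by (split; [apply pow_lt; lra| apply pow_le_1; lra]).
      assert (Hf : exp (- (Rabs s * Q ^ M) / (1 - Q)) <= 1 - - s * Q ^ M).
      { assert (exp (- (Rabs s * Q ^ M) / (1 - Q)) <= 1 - Rabs s * Q ^ M).
        { apply exp_le_1_sub; [|lra]. split; [apply Rmult_le_pos; [apply Rabs_pos|lra]|].
          assert (Rabs s * Q ^ M <= Rabs s * 1) by (apply Rmult_le_compat_l; [apply Rabs_pos|lra]). lra. }
        assert (- s * Q ^ M <= Rabs s * Q ^ M).
        { apply Rmult_le_compat_r; [lra|]. rewrite <- Rabs_Ropp. apply Rle_abs. }
        lra. }
      replace (- Rabs s * (1 - Q ^ S M) / (1 - Q) ^ 2) with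
        (- Rabs s * (1 - Q ^ M) / (1 - Q) ^ 2 + - (Rabs s * Q ^ M) / (1 - Q)) by (simpl; field; lra).
      rewrite exp_plus. apply Rmult_le_compat; try (left; apply exp_pos); auto. }
  eapply Rle_trans; [|apply Hg]. apply exp_le_compat.
  assert (HQn : 0 < Q ^ N <= 1) by (split; [apply pow_lt; lra| apply pow_le_1; lra]).
  assert (0 < (1 - Q) ^ 2) by (apply pow_lt; lra).
  unfold Rdiv. apply Rmult_le_compat_r; [left; apply Rinv_0_lt_compat; auto|].
  assert (0 <= Rabs s) by apply Rabs_pos. nra.
Qed.

Definition qlow Q := exp (- Q / (1 - Q) ^ 2).

Lemma qlow_pos Q : 0 < qlow Q.
Proof. apply exp_pos. Qed.

Lemma qpochQ_ge_qlow Q N : 0 < Q < 1 -> qlow Q <= qpoch Q Q N.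
Proof.
  intros HQ. unfold qlow. replace Q with (Rabs (- Q)) at 1 by (rewrite Rabs_Ropp, Rabs_right; lra).
  replace (qpoch Q Q N) with (qpoch (- - Q) Q N) by (f_equal; ring).
  apply qpoch_ge_exp; auto. rewrite Rabs_Ropp, Rabs_right; lra.
Qed.

Lemma qbin_le_inv_qlow Q n j : 0 < Q < 1 -> qbin Q n j <= / qlow Q.
Proof.
  intros HQ. destruct (Compare_dec.le_lt_dec j n) as [Hj|Hj].
  - assert (E := qbin_qpoch Q n j Hj).
    assert (P1 := qpochQ_pos Q j HQ). assert (P2 := qpochQ_pos Q (n - j) HQ).
    assert (D := qpochQ_decr Q j n HQ Hj). assert (L := qpochQ_ge_qlow Q (n - j) HQ).
    assert (Hl := qlow_pos Q). assert (Hb := qbin_ge0 Q ltac:(lra) n j).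
    assert (qbin Q n j * qpoch Q Q (n - j) <= 1).
    { apply (Rmult_le_reg_r (qpoch Q Q j)); auto. nra. }
    apply (Rmult_le_reg_r (qlow Q)); auto. rewrite Rinv_l by lra. nra.
  - rewrite qbin_gt by auto. left; apply Rinv_0_lt_compat, qlow_pos.
Qed.

Lemma Rabs_qpoch_le_exp Q v N : 0 < Q < 1 -> Rabs (qpoch v Q N) <= exp (Rabs v / (1 - Q)).
Proof.
  intros HQ.
  assert (Hg : forall N, Rabs (qpoch v Q N) <= exp (Rabs v * (1 - Q ^ N) / (1 - Q))).
  { intros M; induction M as [|M IH].
    - simpl. replace (Rabs v * (1 - 1) / (1 - Q)) with 0 by (field; lra). rewrite exp_0, Rabs_R1. lra.
    - rewrite qpochS, Rabs_mult.
      assert (HQn : 0 < Q ^ M <= 1) by (split; [apply pow_lt; lra| apply pow_le_1; lra]).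
      replace (Rabs v * (1 - Q ^ S M) / (1 - Q)) with
        (Rabs v * (1 - Q ^ M) / (1 - Q) + Rabs v * Q ^ M) by (simpl; field; lra).
      rewrite exp_plus. apply Rmult_le_compat; try apply Rabs_pos; auto.
      eapply Rle_trans; [|apply exp_ineq1_le].
      eapply Rle_trans; [apply Rabs_triang|]. rewrite Rabs_R1, Rabs_Ropp, Rabs_mult.
      rewrite (Rabs_right (Q ^ M)) by lra. lra. }
  eapply Rle_trans; [apply Hg|]. apply exp_le_compat.
  assert (HQn : 0 < Q ^ N <= 1) by (split; [apply pow_lt; lra| apply pow_le_1; lra]).
  unfold Rdiv. apply Rmult_le_compat_r; [left; apply Rinv_0_lt_compat; lra|].
  assert (0 <= Rabs v) by apply Rabs_pos. nra.
Qed.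

Lemma is_lim_qpochQ Q : 0 < Q < 1 -> is_lim_seq (qpoch Q Q) (qpoch_inf Q Q) /\ qlow Q <= qpoch_inf Q Q.
Proof.
  intros HQ.
  assert (Ex : ex_lim_seq (qpoch Q Q)) by (apply ex_lim_seq_decr; intros n; apply qpochQ_decr; auto).
  assert (H := Lim_seq_correct _ Ex).
  assert (Hfin : is_finite (Lim_seq (qpoch Q Q))).
  { assert (H1 := is_lim_seq_le (fun _ => qlow Q) (qpoch Q Q) (qlow Q) (Lim_seq (qpoch Q Q))
       (fun n => qpochQ_ge_qlow Q n HQ) (is_lim_seq_const _) H).
    assert (H2 := is_lim_seq_le (qpoch Q Q) (fun _ => 1) (Lim_seq (qpoch Q Q)) 1
       (fun n => qpochQ_decr Q 0 n HQ ltac:(lia)) H (is_lim_seq_const _)).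
    destruct (Lim_seq (qpoch Q Q)); simpl in *; try reflexivity; tauto. }
  unfold qpoch_inf. rewrite <- Hfin in H. split; auto.
  assert (H1 := is_lim_seq_le (fun _ => qlow Q) (qpoch Q Q) (qlow Q) _
       (fun n => qpochQ_ge_qlow Q n HQ) (is_lim_seq_const _) H). simpl in H1. auto.
Qed.

Lemma is_lim_qbin Q j : 0 < Q < 1 -> is_lim_seq (fun n => qbin Q n j) (/ qpoch Q Q j).
Proof.
  intros HQ. destruct (is_lim_qpochQ Q HQ) as [HL HLb]. assert (Hl := qlow_pos Q).
  assert (P1 := qpochQ_pos Q j HQ).
  apply (is_lim_seq_incr_n _ j).
  apply is_lim_seq_ext with (fun m => qpoch Q Q (m + j) / (qpoch Q Q j * qpoch Q Q m)).
  { intros m. assert (E := qbin_qpoch Q (m + j) j ltac:(lia)).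
    replace (m + j - j)%nat with m in E by lia. assert (P2 := qpochQ_pos Q m HQ).
    rewrite <- E. field. lra. }
  replace (/ qpoch Q Q j) with (qpoch_inf Q Q / (qpoch Q Q j * qpoch_inf Q Q)) by (field; lra).
  apply is_lim_seq_div'.
  - apply (is_lim_seq_incr_n (qpoch Q Q) j). auto.
  - apply is_lim_seq_mult'; auto. apply is_lim_seq_const.
  - apply Rgt_not_eq. apply Rmult_lt_0_compat; lra.
Qed.

(** * Euler's identity *)

Lemma ex_series_qtri_pow Q T : 0 < Q < 1 -> 0 <= T -> ex_series (fun j => qtri Q j * T ^ j).
Proof.
  intros HQ HT.
  set (T' := T + 1).
  assert (HT' : 0 < T') by (unfold T'; lra).
  assert (Hex : ex_series (fun j => Rabs (qtri Q j * T' ^ j))).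
  { apply ex_series_DAlembert with 0; [lra| |].
    - intros n. apply Rgt_not_eq. apply Rmult_lt_0_compat; [apply qtri_pos; lra| apply pow_lt; lra].
    - apply is_lim_seq_ext with (fun n => T' * Q ^ n).
      + intros n. simpl qtri. simpl pow.
        assert (0 < qtri Q n) by (apply qtri_pos; lra). assert (0 < T' ^ n) by (apply pow_lt; lra).
        assert (0 < Q ^ n) by (apply pow_lt; lra).
        replace (qtri Q n * Q ^ n * (T' * T' ^ n) / (qtri Q n * T' ^ n)) with (T' * Q ^ n) by (field; lra).
        rewrite Rabs_right; [reflexivity|]. apply Rle_ge. apply Rmult_le_pos; lra.
      + replace 0 with (T' * 0) by ring. apply (is_lim_seq_scal_l _ T' 0).
        apply is_lim_seq_geom. rewrite Rabs_right; lra. }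
  apply ex_series_Rabs.
  apply (ex_series_le (fun j => Rabs (qtri Q j * T ^ j)) (fun j => Rabs (qtri Q j * T' ^ j))); auto.
  intros n. unfold norm; simpl. unfold abs; simpl. rewrite Rabs_Rabsolu.
  assert (0 < qtri Q n) by (apply qtri_pos; lra).
  rewrite !Rabs_mult, !Rabs_right by (apply Rle_ge; first [apply pow_le; lra | lra]).
  apply Rmult_le_compat_l; [lra|]. apply pow_incr. unfold T'; lra.
Qed.

Definition euler_term Q t j := qtri Q j * t ^ j / qpoch Q Q j.
Definition euler_sum Q t := Series (euler_term Q t).

Lemma is_lim_qpoch_euler_sum Q t : 0 < Q < 1 -> is_lim_seq (qpoch (- t) Q) (euler_sum Q t).
Proof.
  intros HQ. unfold euler_sum.
  apply is_lim_seq_ext with (fun n => sum_f_R0 (fun j => qbin Q n j * qtri Q j * t ^ j) n).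
  { intros n. rewrite qpoch_qbin. apply sum_eq. intros; f_equal. f_equal. ring. }
  apply tannery with (g := fun j => qtri Q j * Rabs t ^ j * / qlow Q).
  - intros j. unfold euler_term.
    replace (qtri Q j * t ^ j / qpoch Q Q j) with (/ qpoch Q Q j * (qtri Q j * t ^ j)) by (unfold Rdiv; ring).
    apply is_lim_seq_ext with (fun n => qbin Q n j * (qtri Q j * t ^ j)); [intros; ring|].
    apply (is_lim_seq_scal_r _ (qtri Q j * t ^ j) (/ qpoch Q Q j)). apply is_lim_qbin; auto.
  - intros n j. assert (0 < qtri Q j) by (apply qtri_pos; lra).
    assert (B := qbin_le_inv_qlow Q n j HQ). assert (B0 := qbin_ge0 Q ltac:(lra) n j).
    rewrite !Rabs_mult, Rabs_right by lra. rewrite (Rabs_right (qtri Q j)) by lra. rewrite <- RPow_abs.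
    assert (0 <= Rabs t ^ j) by (apply pow_le, Rabs_pos).
    replace (qtri Q j * Rabs t ^ j * / qlow Q) with (/ qlow Q * (qtri Q j * Rabs t ^ j)) by ring.
    rewrite Rmult_assoc. apply Rmult_le_compat_r; [nra| auto].
  - apply ex_series_scal_r. apply ex_series_qtri_pow; auto. apply Rabs_pos.
Qed.

Lemma qpoch_inf_euler_sum Q t : 0 < Q < 1 -> qpoch_inf (- t) Q = euler_sum Q t.
Proof.
  intros HQ. unfold qpoch_inf.
  rewrite (is_lim_seq_unique (fun n => qpoch (- t) Q n) _ (is_lim_qpoch_euler_sum Q t HQ)). reflexivity.
Qed.

Lemma euler_sum_shift Q t y : 0 < Q < 1 -> euler_sum Q t = qpoch (- t) Q y * euler_sum Q (t * Q ^ y).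
Proof.
  intros HQ.
  assert (H1 := proj1 (is_lim_seq_incr_n (qpoch (- t) Q) y (euler_sum Q t)) (is_lim_qpoch_euler_sum Q t HQ)).
  assert (H2 : is_lim_seq (fun n => qpoch (- t) Q (n + y)) (qpoch (- t) Q y * euler_sum Q (t * Q ^ y))).
  { apply is_lim_seq_ext with (fun n => qpoch (- t) Q y * qpoch (- (t * Q ^ y)) Q n).
    - intros n. rewrite Nat.add_comm, qpoch_add. f_equal. f_equal. ring.
    - apply (is_lim_seq_scal_l _ _ (euler_sum Q (t * Q ^ y))). apply is_lim_qpoch_euler_sum; auto. }
  apply is_lim_seq_unique in H1. apply is_lim_seq_unique in H2. rewrite H1 in H2. injection H2. auto.
Qed.

Lemma euler_sum_ge_exp Q s : 0 < Q < 1 -> Rabs s <= Q -> exp (- Rabs s / (1 - Q) ^ 2) <= euler_sum Q s.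
Proof.
  intros HQ Hs.
  assert (B := is_lim_seq_le (fun _ => exp (- Rabs s / (1 - Q) ^ 2)) (qpoch (- s) Q) _ _
    (qpoch_ge_exp Q s HQ Hs) (is_lim_seq_const _) (is_lim_qpoch_euler_sum Q s HQ)). simpl in B. auto.
Qed.

Lemma euler_sum_neq0 Q t : 0 < Q < 1 -> (forall i, 1 + t * Q ^ i <> 0) -> euler_sum Q t <> 0.
Proof.
  intros HQ Ht.
  assert (He : 0 < Q / (Rabs t + 1))
    by (apply Rdiv_lt_0_compat; [lra| assert (0 <= Rabs t) by apply Rabs_pos; lra]).
  destruct (proj2 (is_lim_seq_spec _ _) (is_lim_seq_geom Q ltac:(rewrite Rabs_right; lra)) (mkposreal _ He))
    as [y Hy].
  specialize (Hy y (le_n y)). simpl in Hy. rewrite Rminus_0_r, Rabs_right in Hy by (apply Rle_ge, pow_le; lra).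
  rewrite (euler_sum_shift Q t y HQ).
  apply Rmult_integral_contrapositive_currified.
  - apply qpoch_neq0. intros i. specialize (Ht i). lra.
  - assert (Hs : Rabs (t * Q ^ y) <= Q).
    { rewrite Rabs_mult, (Rabs_right (Q ^ y)) by (apply Rle_ge, pow_le; lra).
      assert (0 <= Rabs t) by apply Rabs_pos.
      assert (Q ^ y * (Rabs t + 1) < Q)
        by (apply (Rmult_lt_reg_r (/ (Rabs t + 1))); [apply Rinv_0_lt_compat; lra|];
        replace (Q ^ y * (Rabs t + 1) * / (Rabs t + 1)) with (Q ^ y) by (field; lra); exact Hy).
      assert (0 <= Q ^ y) by (apply pow_le; lra). nra. }
    assert (L := euler_sum_ge_exp Q (t * Q ^ y) HQ Hs).
    assert (P := exp_pos (- Rabs (t * Q ^ y) / (1 - Q) ^ 2)). lra.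
Qed.

Lemma ex_series_euler_term Q t : 0 < Q < 1 -> ex_series (euler_term Q t).
Proof.
  intros HQ. apply ex_series_Rabs.
  apply (ex_series_le (fun j => Rabs (euler_term Q t j)) (fun j => qtri Q j * Rabs t ^ j * / qlow Q)).
  - intros n. unfold norm; simpl. unfold abs; simpl. rewrite Rabs_Rabsolu. unfold euler_term.
    assert (0 < qtri Q n) by (apply qtri_pos; lra). assert (P := qpochQ_pos Q n HQ).
    assert (L := qpochQ_ge_qlow Q n HQ). assert (Hl := qlow_pos Q).
    unfold Rdiv. rewrite !Rabs_mult, (Rabs_right (qtri Q n)) by lra. rewrite <- RPow_abs.
    rewrite (Rabs_right (/ qpoch Q Q n)) by (apply Rle_ge; left; apply Rinv_0_lt_compat; lra).
    assert (0 <= Rabs t ^ n) by (apply pow_le, Rabs_pos).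
    apply Rmult_le_compat_l; [nra|]. apply Rinv_le_contravar; lra.
  - apply ex_series_scal_r. apply ex_series_qtri_pow; auto. apply Rabs_pos.
Qed.

Lemma is_series_euler_term Q t : 0 < Q < 1 -> is_series (euler_term Q t) (euler_sum Q t).
Proof. intros HQ. apply Series_correct. apply ex_series_euler_term; auto. Qed.

(** * Orthogonality of the q-Charlier polynomials *)

Section Charlier.
Variables (Q c : R) (y : nat).
Hypothesis HQ : 0 < Q < 1.
Hypothesis Hc : 0 < c.
Let p := / Q.
Let a := / c.
Let z := - (Q * (c * Q ^ y)).

Definition charlier_weight n := a ^ n * qtri Q n / qpoch Q Q n.
Definition charlier_poly n := phi21_trunc (p ^ y) (p ^ n) 0 Q z n.
Definition charlier_coef k := qpoch (p ^ y) Q k / qpoch Q Q k * z ^ k.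
Definition charlier_pow_coef j := sum_f_R0 (fun k => charlier_coef k * qbin Q k j * qtri Q j * (-1) ^ j) y.

Lemma p_pow_Q_pow n : p ^ n * Q ^ n = 1.
Proof. unfold p. apply pow_inv_mul_pow. lra. Qed.

Lemma charlier_poly_qpoch n : charlier_poly n = sum_f_R0 (fun k => charlier_coef k * qpoch (p ^ n) Q k) y.
Proof.
  unfold charlier_poly, phi21_trunc.
  transitivity (sum_f_R0 (fun k => charlier_coef k * qpoch (p ^ n) Q k) n).
  { apply sum_eq. intros k _. unfold phi21_term, charlier_coef. rewrite qpoch_0_l.
    assert (P := qpochQ_pos Q k HQ). field. lra. }
  assert (Z : forall k, (max n y < k)%nat -> charlier_coef k * qpoch (p ^ n) Q k = 0).
  { intros k Hk. unfold p. rewrite (qpoch_inv_pow_0 Q n k) by (lra || lia). ring. }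
  assert (Zy : forall k, (y < k)%nat -> charlier_coef k * qpoch (p ^ n) Q k = 0).
  { intros k Hk. unfold charlier_coef, p. rewrite (qpoch_inv_pow_0 Q y k) by (lra || lia). unfold Rdiv. ring. }
  assert (Zn : forall k, (n < k)%nat -> charlier_coef k * qpoch (p ^ n) Q k = 0).
  { intros k Hk. unfold p. rewrite (qpoch_inv_pow_0 Q n k) by (lra || lia). ring. }
  rewrite <- (sum_f_R0_extend _ n (max n y)) by (auto; lia).
  rewrite <- (sum_f_R0_extend _ y (max n y)) by (auto; lia). reflexivity.
Qed.

Lemma charlier_poly_pow n : charlier_poly n = sum_f_R0 (fun j => charlier_pow_coef j * (p ^ j) ^ n) y.
Proof.
  rewrite charlier_poly_qpoch. unfold charlier_pow_coef.
  transitivity (sum_f_R0 (fun k =>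
    sum_f_R0 (fun j => charlier_coef k * qbin Q k j * qtri Q j * (-1) ^ j * (p ^ j) ^ n) y) y).
  - apply sum_eq. intros k Hk. rewrite qpoch_qbin. rewrite <- sum_f_R0_scal_l.
    rewrite (sum_f_R0_extend _ k y) by (auto; intros j Hj; rewrite qbin_gt by lia; ring).
    apply sum_eq. intros j Hj.
    replace ((- p ^ n) ^ j) with ((-1) ^ j * (p ^ j) ^ n)
      by (replace (- p ^ n) with (-1 * p ^ n) by ring;
          rewrite Rpow_mult_distr, <- !pow_mult, Nat.mul_comm; reflexivity).
    ring.
  - rewrite sum_f_R0_swap. apply sum_eq. intros j Hj. rewrite Rmult_comm, scal_sum. apply sum_eq. intros; ring.
Qed.

Lemma charlier_pow_coef_top : charlier_pow_coef y = charlier_coef y * qtri Q y * (-1) ^ y.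
Proof.
  unfold charlier_pow_coef. rewrite sum_f_R0_last by (intros k Hk; rewrite qbin_gt by lia; ring).
  rewrite qbin_diag. ring.
Qed.

Lemma qtri_sqr_inv_pow k m : qtri Q k * qtri Q k * Q ^ (k * m) * (p ^ (k + m)) ^ k = p ^ k.
Proof.
  assert (T := qtri_sqr Q k).
  assert (T' : qtri Q k * qtri Q k = Q ^ (k * k) * p ^ k).
  { transitivity (qtri Q k * qtri Q k * Q ^ k * p ^ k); [|rewrite T; ring].
    rewrite Rmult_assoc, (Rmult_comm (Q ^ k)), p_pow_Q_pow. ring. }
  rewrite T'. rewrite <- pow_mult. replace ((k + m) * k)%nat with (k * k + k * m)%nat by lia.
  rewrite pow_add.
  transitivity (p ^ k * (p ^ (k * k) * Q ^ (k * k)) * (p ^ (k * m) * Q ^ (k * m))); [ring|].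
  rewrite !p_pow_Q_pow. ring.
Qed.

Lemma is_series_charlier_moment_qpoch j k :
  is_series (fun n => charlier_weight n * (p ^ j) ^ n * qpoch (p ^ n) Q k)
  ((- a) ^ k * p ^ k * (p ^ j) ^ k * euler_sum Q (a * p ^ j)).
Proof.
  assert (Hshift : forall m, charlier_weight (k + m) * (p ^ j) ^ (k + m) * qpoch (p ^ (k + m)) Q k =
                   ((- a) ^ k * p ^ k * (p ^ j) ^ k) * euler_term Q (a * p ^ j) m).
  { intros m. unfold charlier_weight, euler_term.
    assert (E := qpoch_inv_pow Q (proj1 HQ) (k + m) k ltac:(lia)). replace (k + m - k)%nat with m in E by lia.
    fold p in E.
    assert (P1 := qpochQ_pos Q m HQ). assert (P2 := qpochQ_pos Q (k + m) HQ).
    replace (qpoch (p ^ (k + m)) Q k)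
      with ((-1) ^ k * qtri Q k * (p ^ (k + m)) ^ k * qpoch Q Q (k + m) / qpoch Q Q m)
      by (rewrite <- E; field; lra).
    rewrite qtri_add. assert (B := qtri_sqr_inv_pow k m).
    replace ((- a) ^ k) with ((-1) ^ k * a ^ k) by (rewrite <- Rpow_mult_distr; f_equal; ring).
    rewrite (pow_add a k m), (pow_add (p ^ j) k m), Rpow_mult_distr. rewrite <- B. field. lra. }
  destruct k as [|k'].
  - apply is_series_ext_R with (euler_term Q (a * p ^ j)).
    + intros n. unfold charlier_weight, euler_term. simpl qpoch. rewrite Rpow_mult_distr. unfold Rdiv. ring.
    + replace ((- a) ^ 0 * p ^ 0 * (p ^ j) ^ 0 * euler_sum Q (a * p ^ j)) with (euler_sum Q (a * p ^ j))
        by (simpl; ring).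
      apply is_series_euler_term; auto.
  - apply is_series_shift_zero with (S k').
    { intros i Hi. unfold p. rewrite (qpoch_inv_pow_0 Q i (S k')) by (lra || lia). ring. }
    apply is_series_ext_R with (fun m => ((- a) ^ S k' * p ^ S k' * (p ^ j) ^ S k') * euler_term Q (a * p ^ j) m).
    + intros m. rewrite Hshift. reflexivity.
    + apply is_series_scal_R. apply is_series_euler_term; auto.
Qed.

Lemma qpoch_inv_pow_qbin_sum u :
  sum_f_R0 (fun k => qpoch (p ^ y) Q k / qpoch Q Q k * u ^ k) y = qpoch (p ^ y * u) Q y.
Proof.
  rewrite qpoch_qbin. apply sum_eq. intros k Hk.
  assert (E := qpoch_inv_pow Q (proj1 HQ) y k Hk). fold p in E.
  assert (E1 := qbin_qpoch Q y k Hk).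
  assert (P1 := qpochQ_pos Q k HQ). assert (P2 := qpochQ_pos Q (y - k) HQ).
  replace (qpoch (p ^ y) Q k) with ((-1) ^ k * qtri Q k * (p ^ y) ^ k * qpoch Q Q y / qpoch Q Q (y - k))
      by (rewrite <- E; field; lra).
  rewrite <- E1. replace (- (p ^ y * u)) with (-1 * (p ^ y * u)) by ring.
  rewrite !Rpow_mult_distr. field. lra.
Qed.

Lemma is_series_charlier_moment_poly j : (j <= y)%nat ->
  is_series (fun n => charlier_weight n * (p ^ j) ^ n * charlier_poly n)
  (euler_sum Q (a * p ^ j) * qpoch (p ^ j) Q y).
Proof.
  intros Hj.
  apply is_series_ext_R with
    (fun n => sum_f_R0 (fun k => charlier_coef k * (charlier_weight n * (p ^ j) ^ n * qpoch (p ^ n) Q k)) y).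
  { intros n. rewrite charlier_poly_qpoch. rewrite <- sum_f_R0_scal_l. apply sum_eq. intros; ring. }
  replace (euler_sum Q (a * p ^ j) * qpoch (p ^ j) Q y) with
    (sum_f_R0 (fun k => charlier_coef k * ((- a) ^ k * p ^ k * (p ^ j) ^ k * euler_sum Q (a * p ^ j))) y).
  { apply is_series_sum_f_R0_comb with (u := fun k n => charlier_weight n * (p ^ j) ^ n * qpoch (p ^ n) Q k).
    intros k _. apply is_series_charlier_moment_qpoch. }
  transitivity (euler_sum Q (a * p ^ j)
    * sum_f_R0 (fun k => qpoch (p ^ y) Q k / qpoch Q Q k * (Q ^ y * p ^ j) ^ k) y).
  { rewrite <- sum_f_R0_scal_l. apply sum_eq. intros k _. unfold charlier_coef, z, a.
    replace ((Q ^ y * p ^ j) ^ k) with ((- (Q * (c * Q ^ y))) ^ k * (- / c) ^ k * p ^ k * (p ^ j) ^ k).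
    - ring.
    - rewrite <- !Rpow_mult_distr. f_equal. unfold p. field. lra. }
  rewrite qpoch_inv_pow_qbin_sum. f_equal. f_equal.
  transitivity ((p ^ y * Q ^ y) * p ^ j); [ring| rewrite p_pow_Q_pow; ring].
Qed.

Lemma qtri_qpoch_rescale m : c ^ m * qtri Q m * qpoch (- (a * p ^ m)) Q m = p ^ m * qpoch (- (c * Q)) Q m.
Proof.
  induction m.
  - simpl. ring.
  - rewrite qpochS_l.
    replace (- (a * p ^ S m) * Q) with (- (a * p ^ m)) by (simpl; unfold p; field; lra).
    rewrite qpochS. simpl qtri.
    transitivity ((c ^ m * qtri Q m * qpoch (- (a * p ^ m)) Q m) * (c * Q ^ m * (1 - - (a * p ^ S m))));
      [simpl; ring|].
    rewrite IHm.
    replace (c * Q ^ m * (1 - - (a * p ^ S m))) with (p * (1 - - (c * Q) * Q ^ m)); [simpl; ring|].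
    assert (H1 := p_pow_Q_pow m). unfold a. simpl pow.
    transitivity (p + c * Q * Q ^ m * p); [ring|].
    transitivity (c * Q ^ m + c * / c * p * (p ^ m * Q ^ m)); [|ring].
    rewrite H1. unfold p. field. split; lra.
Qed.

Lemma charlier_norm_top :
  charlier_pow_coef y * (euler_sum Q (a * p ^ y) * qpoch (p ^ y) Q y)
  = p ^ y * qpoch Q Q y * qpoch (- (c * Q)) Q y * euler_sum Q a.
Proof.
  rewrite charlier_pow_coef_top, (euler_sum_shift Q (a * p ^ y) y HQ).
  replace (a * p ^ y * Q ^ y) with a by (rewrite Rmult_assoc, p_pow_Q_pow; ring).
  assert (E := qpoch_inv_pow Q (proj1 HQ) y y (le_n y)).
  fold p in E. rewrite Nat.sub_diag, Rmult_1_r in E.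
  unfold charlier_coef. rewrite E.
  assert (P1 := qpochQ_pos Q y HQ).
  unfold z.
  replace ((- (Q * (c * Q ^ y))) ^ y) with ((-1) ^ y * (Q ^ y * (c ^ y * (Q ^ y) ^ y)))
    by (rewrite <- !Rpow_mult_distr; f_equal; ring).
  assert (Hpp : (p ^ y) ^ y * (Q ^ y) ^ y = 1) by (rewrite <- Rpow_mult_distr, p_pow_Q_pow; apply pow1).
  transitivity (((-1) ^ y * (-1) ^ y) * ((-1) ^ y * (-1) ^ y) * ((p ^ y) ^ y * (Q ^ y) ^ y)
     * (qtri Q y * qtri Q y * Q ^ y) * (p ^ y) ^ y
     * qpoch Q Q y * (c ^ y * qtri Q y * qpoch (- (a * p ^ y)) Q y) * euler_sum Q a); [field; lra|].
  rewrite neg1_pow_sqr, Hpp, qtri_sqr, qtri_qpoch_rescale, <- pow_mult.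
  transitivity (p ^ y * qpoch Q Q y * qpoch (- (c * Q)) Q y * euler_sum Q a * (p ^ (y * y) * Q ^ (y * y)));
    [ring|].
  rewrite p_pow_Q_pow. ring.
Qed.

(* Expanding one factor [charlier_poly n] in the powers [(Q^-j)^n] (j <= y), all moments but the
   top one vanish by [is_series_charlier_moment_poly], since [(Q^-j; Q)_y = 0] for [j < y]. *)
Theorem is_series_charlier_norm :
  is_series (fun n => charlier_weight n * charlier_poly n ^ 2)
    (p ^ y * qpoch Q Q y * qpoch (- (c * Q)) Q y * euler_sum Q a).
Proof.
  apply is_series_ext_R with
    (fun n => sum_f_R0 (fun j => charlier_pow_coef j * (charlier_weight n * (p ^ j) ^ n * charlier_poly n)) y).
  { intros n.
    transitivity (charlier_weight n * charlier_poly n * sum_f_R0 (fun j => charlier_pow_coef j * (p ^ j) ^ n) y).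
    - rewrite <- sum_f_R0_scal_l. apply sum_eq. intros; ring.
    - rewrite <- charlier_poly_pow. ring. }
  rewrite <- charlier_norm_top.
  rewrite <- (sum_f_R0_last (fun j => charlier_pow_coef j * (euler_sum Q (a * p ^ j) * qpoch (p ^ j) Q y)))
    by (intros j Hj; unfold p; rewrite qpoch_inv_pow_0 by (lra || lia); ring).
  apply is_series_sum_f_R0_comb with (u := fun j n => charlier_weight n * (p ^ j) ^ n * charlier_poly n).
  intros j Hj. apply is_series_charlier_moment_poly; auto.
Qed.

End Charlier.

(** * Points outside the spectrum *)

Definition hnorm (c Q : R) (n : nat) : R := c ^ n * qtri Q n * qpoch Q Q n.

Lemma hnorm_pos c Q n : 0 < Q < 1 -> 0 < c -> 0 < hnorm c Q n.
Proof.
  intros HQ Hc. unfold hnorm. apply Rmult_lt_0_compat; [apply Rmult_lt_0_compat|].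
  - apply pow_lt; auto.
  - apply qtri_pos; lra.
  - apply qpochQ_pos; auto.
Qed.

Lemma hnorm_S c Q m : hnorm c Q (S m) = hnorm c Q m * (Q ^ m * c * 1 * (1 - Q ^ S m)).
Proof. unfold hnorm. simpl. ring. Qed.

Lemma not_ex_series_ge (u : nat -> R) (d : R) : 0 < d ->
  (exists N, forall n, (N <= n)%nat -> d <= u n) -> ~ ex_series u.
Proof.
  intros Hd [N HN] Hex.
  destruct (proj2 (is_lim_seq_spec _ _) (ex_series_lim_0 _ Hex) (mkposreal _ Hd)) as [N2 HN2].
  specialize (HN (max N N2) ltac:(lia)). specialize (HN2 (max N N2) ltac:(lia)). simpl in HN2.
  rewrite Rminus_0_r in HN2. assert (X := Rle_abs (u (max N N2))). lra.
Qed.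

Lemma is_lim_hatPr_div_pow c Q al : 0 < Q < 1 -> al <> 0 ->
  is_lim_seq (fun n => hatPr c Q n al / al ^ n) (euler_sum Q (/ al) * euler_sum Q (- (c * / al))).
Proof.
  intros HQ Hal. set (u := / al).
  apply is_lim_seq_ext
    with (fun n => sum_f_R0 (fun j => qbin Q n j * qtri Q j * u ^ j * qpoch (c * u) Q (n - j)) n).
  { intros n. symmetry. unfold hatPr, Rdiv. rewrite Rmult_comm, <- sum_f_R0_scal_l.
    apply sum_eq. intros j Hj.
    rewrite Rfall_qpoch by auto. unfold qcoef. fold u.
    replace (al ^ n) with (al ^ j * al ^ (n - j)) by (rewrite <- pow_add; f_equal; lia).
    unfold u. rewrite pow_inv. field. split; apply pow_nonzero; auto. }
  replace (euler_sum Q u * euler_sum Q (- (c * u)))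
    with (Series (fun j => euler_term Q u j * euler_sum Q (- (c * u)))).
  2:{ rewrite Series_scal_r. reflexivity. }
  set (K := / qlow Q * exp (Rabs (c * u) / (1 - Q))).
  apply tannery with (g := fun j => qtri Q j * Rabs u ^ j * K).
  - intros j. apply (is_lim_seq_incr_n _ j).
    apply is_lim_seq_ext with (fun m => (qbin Q (m + j) j * (qtri Q j * u ^ j)) * qpoch (- - (c * u)) Q m).
    { intros m. replace (m + j - j)%nat with m by lia. replace (- - (c * u)) with (c * u) by ring. ring. }
    unfold euler_term.
    replace (qtri Q j * u ^ j / qpoch Q Q j) with (/ qpoch Q Q j * (qtri Q j * u ^ j)) by (unfold Rdiv; ring).
    apply is_lim_seq_mult'.
    + apply (is_lim_seq_scal_r _ (qtri Q j * u ^ j) (/ qpoch Q Q j)).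
      apply (is_lim_seq_incr_n (fun n => qbin Q n j) j). apply is_lim_qbin; auto.
    + apply is_lim_qpoch_euler_sum; auto.
  - intros n j.
    assert (B := qbin_le_inv_qlow Q n j HQ). assert (B0 := qbin_ge0 Q ltac:(lra) n j).
    assert (U := Rabs_qpoch_le_exp Q (c * u) (n - j) HQ).
    assert (T : 0 <= qtri Q j * Rabs u ^ j)
      by (apply Rmult_le_pos; [left; apply qtri_pos; lra| apply pow_le, Rabs_pos]).
    rewrite !Rabs_mult, (Rabs_right (qbin Q n j)), (Rabs_right (qtri Q j)), <- RPow_abs
      by (apply Rle_ge; auto; left; apply qtri_pos; lra).
    replace (qbin Q n j * qtri Q j * Rabs u ^ j * Rabs (qpoch (c * u) Q (n - j)))
      with (qtri Q j * Rabs u ^ j * (qbin Q n j * Rabs (qpoch (c * u) Q (n - j)))) by ring.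
    apply Rmult_le_compat_l; auto. unfold K.
    apply Rmult_le_compat; auto using Rabs_pos.
  - apply ex_series_scal_r, ex_series_qtri_pow; auto using Rabs_pos.
Qed.

Lemma pow_div_qtri_incr_eventually (r : R) Q : 0 < Q < 1 -> 0 < r ->
  exists N0, forall n, (N0 <= n)%nat -> r ^ N0 / qtri Q N0 <= r ^ n / qtri Q n.
Proof.
  intros HQ Hr.
  destruct (proj2 (is_lim_seq_spec _ _) (is_lim_seq_geom Q ltac:(rewrite Rabs_right; lra)) (mkposreal _ Hr))
    as [N0 HN].
  exists N0. intros n Hn. induction Hn; [lra|].
  specialize (HN m Hn). simpl in HN. rewrite Rminus_0_r, Rabs_right in HN by (apply Rle_ge, pow_le; lra).
  eapply Rle_trans; [apply IHHn|]. simpl qtri. simpl pow.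
  assert (0 < qtri Q m) by (apply qtri_pos; lra). assert (0 < Q ^ m) by (apply pow_lt; lra).
  assert (0 < r ^ m) by (apply pow_lt; lra).
  replace (r * r ^ m / (qtri Q m * Q ^ m)) with (r ^ m / qtri Q m * (r / Q ^ m)) by (field; lra).
  assert (1 <= r / Q ^ m) by (apply (Rmult_le_reg_r (Q ^ m)); auto; unfold Rdiv; rewrite Rmult_assoc, Rinv_l; lra).
  assert (0 < r ^ m / qtri Q m) by (apply Rdiv_lt_0_compat; auto). nra.
Qed.

Lemma hatPr_sq_div_hnorm c Q n al : 0 < Q < 1 -> 0 < c -> al <> 0 ->
  hatPr c Q n al ^ 2 / hnorm c Q n
  = (hatPr c Q n al / al ^ n) ^ 2 * ((al ^ 2 / c) ^ n / qtri Q n) / qpoch Q Q n.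
Proof.
  intros HQ Hc Hal. unfold hnorm.
  assert (0 < qtri Q n) by (apply qtri_pos; lra). assert (P := qpochQ_pos Q n HQ).
  assert (al ^ n <> 0) by (apply pow_nonzero; auto).
  replace ((al ^ 2 / c) ^ n) with ((al ^ n) ^ 2 / c ^ n)
    by (unfold Rdiv; rewrite Rpow_mult_distr, pow_inv, <- !pow_mult, Nat.mul_comm; reflexivity).
  field. repeat split; try lra. apply pow_nonzero; lra.
Qed.

(* For real [al] off the spectrum, [hatPr c Q n al] grows like [L al^n] with [L <> 0], which beats the
   weights [1 / hnorm c Q n]. *)
Theorem not_ex_series_real c Q al : 0 < Q < 1 -> 0 < c -> al <> 0 ->
  (forall i, al <> - Q ^ i) -> (forall i, al <> c * Q ^ i) ->
  ~ ex_series (fun n => hatPr c Q n al ^ 2 / hnorm c Q n).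
Proof.
  intros HQ Hc Hal H1 H2.
  set (L := euler_sum Q (/ al) * euler_sum Q (- (c * / al))).
  assert (HL : 0 < Rabs L / 2).
  { assert (L <> 0); [|assert (0 < Rabs L) by (apply Rabs_pos_lt; auto); lra].
    unfold L. apply Rmult_integral_contrapositive_currified; apply euler_sum_neq0; auto.
    - intros i Hi. apply (H1 i).
      assert (E : al * (1 + / al * Q ^ i) = al + Q ^ i) by (field; auto). rewrite Hi in E. lra.
    - intros i Hi. apply (H2 i).
      assert (E : al * (1 + - (c * / al) * Q ^ i) = al - c * Q ^ i) by (field; auto). rewrite Hi in E. lra. }
  destruct (proj2 (is_lim_seq_spec _ _) (is_lim_hatPr_div_pow c Q al HQ Hal) (mkposreal _ HL)) as [N1 HN1].
  set (r := al ^ 2 / c).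
  assert (Hr : 0 < r) by (unfold r; apply Rdiv_lt_0_compat; [apply pow2_gt_0|]; auto).
  destruct (pow_div_qtri_incr_eventually r Q HQ Hr) as [N0 HN0].
  set (s0 := r ^ N0 / qtri Q N0).
  assert (Hs0 : 0 < s0) by (unfold s0; apply Rdiv_lt_0_compat; [apply pow_lt; auto| apply qtri_pos; lra]).
  apply (not_ex_series_ge _ ((Rabs L / 2) ^ 2 * s0)); [apply Rmult_lt_0_compat; [apply pow_lt|]; lra|].
  exists (max N0 N1). intros n Hn. rewrite hatPr_sq_div_hnorm by auto. fold r.
  specialize (HN1 n ltac:(lia)). specialize (HN0 n ltac:(lia)). simpl in HN1. fold L in HN1.
  set (G := hatPr c Q n al / al ^ n) in *.
  assert (HG : (Rabs L / 2) ^ 2 <= G ^ 2).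
  { rewrite <- (pow2_abs G). apply pow_incr.
    assert (Rabs L <= Rabs G + Rabs (G - L)).
    { replace L with (G - (G - L)) at 1 by ring. eapply Rle_trans; [apply Rabs_triang|]. rewrite Rabs_Ropp. lra. }
    lra. }
  assert (PQn : 0 < qpoch Q Q n <= 1) by (split; [apply qpochQ_pos; auto| apply (qpochQ_decr Q 0 n HQ); lia]).
  assert (0 < r ^ n / qtri Q n) by (apply Rdiv_lt_0_compat; [apply pow_lt| apply qtri_pos]; lra).
  apply Rle_trans with (G ^ 2 * (r ^ n / qtri Q n)).
  - apply Rmult_le_compat; [apply pow2_ge_0| lra| exact HG| exact HN0].
  - unfold Rdiv at 2. rewrite <- (Rmult_1_r (G ^ 2 * (r ^ n / qtri Q n))) at 1.
    apply Rmult_le_compat_l; [nra|]. rewrite <- Rinv_1. apply Rinv_le_contravar; lra.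
Qed.

Lemma recurrence_coef_bounds c Q n : 0 < Q < 1 -> 0 < c -> 0 < Q ^ n * c * 1 * (1 - Q ^ S n) <= c.
Proof.
  intros HQ Hc.
  assert (0 < Q ^ n <= 1) by (split; [apply pow_lt; lra| apply pow_le_1; lra]).
  assert (0 < Q ^ S n < 1) by (split; [apply pow_lt; lra| apply pow_lt_1_compat; lra || lia]).
  assert (0 < Q ^ n * (1 - Q ^ S n) <= 1) by (split; [apply Rmult_lt_0_compat; lra| nra]).
  replace (Q ^ n * c * 1 * (1 - Q ^ S n)) with (c * (Q ^ n * (1 - Q ^ S n))) by ring.
  split; [apply Rmult_lt_0_compat; lra| nra].
Qed.

Section NonReal.
Variables (c Q : R) (lam : C).
Hypothesis HQ : 0 < Q < 1.
Hypothesis Hc : 0 < c.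
Let P n := hatP c 1 Q n lam.
Let v n := Cmod (P n) ^ 2 / hnorm c Q n.
Let W n := (Im (P (S n)) * Re (P n) - Re (P (S n)) * Im (P n)) / hnorm c Q n.

Lemma green_identity n : Im lam * sum_f_R0 v n = W n.
Proof.
  induction n.
  - unfold v, W, P. simpl sum_f_R0. rewrite hatP_1, hatP_0, Cmod_1.
    unfold hnorm, Im, Re. simpl. field.
  - rewrite tech5, Rmult_plus_distr_l, IHn. unfold W, v, P.
    rewrite hatP_SS, Cmod2_alt, hnorm_S.
    assert (0 < hnorm c Q n) by (apply hnorm_pos; auto).
    assert (Hh := recurrence_coef_bounds c Q n HQ Hc).
    set (h := Q ^ n * c * 1 * (1 - Q ^ S n)) in *.
    destruct (hatP c 1 Q (S n) lam) as [x1 y1]. destruct (hatP c 1 Q n lam) as [x0 y0].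
    unfold Re, Im. simpl. field. lra.
Qed.

Lemma wronskian_sq_le n : W n ^ 2 <= c * (v (S n) * v n).
Proof.
  unfold W, v. rewrite !Cmod2_alt, hnorm_S.
  set (h := Q ^ n * c * 1 * (1 - Q ^ S n)).
  assert (Hh := recurrence_coef_bounds c Q n HQ Hc). fold h in Hh.
  assert (HK : 0 < hnorm c Q n) by (apply hnorm_pos; auto).
  set (a1 := Re (P (S n))). set (b1 := Im (P (S n))).
  set (a0 := Re (P n)). set (b0 := Im (P n)).
  set (K := hnorm c Q n) in *.
  assert (Lagrange : (b1 * a0 - a1 * b0) ^ 2 <= (a1 ^ 2 + b1 ^ 2) * (a0 ^ 2 + b0 ^ 2)).
  { assert (0 <= (a1 * a0 + b1 * b0) ^ 2) by apply pow2_ge_0. nra. }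
  replace (((b1 * a0 - a1 * b0) / K) ^ 2) with ((b1 * a0 - a1 * b0) ^ 2 / (K * K)) by (field; lra).
  replace (c * ((a1 ^ 2 + b1 ^ 2) / (K * h) * ((a0 ^ 2 + b0 ^ 2) / K)))
    with ((c / h) * ((a1 ^ 2 + b1 ^ 2) * (a0 ^ 2 + b0 ^ 2) / (K * K))) by (field; lra).
  assert (Hch : 1 <= c / h)
    by (apply (Rmult_le_reg_r h); [lra|]; unfold Rdiv; rewrite Rmult_assoc, Rinv_l; lra).
  assert (HKK : 0 < / (K * K)) by (apply Rinv_0_lt_compat; nra).
  assert (HY : 0 <= (a1 ^ 2 + b1 ^ 2) * (a0 ^ 2 + b0 ^ 2) * / (K * K))
    by (apply Rmult_le_pos; [apply Rmult_le_pos; nra| lra]).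
  unfold Rdiv at 1 3.
  apply Rle_trans with ((a1 ^ 2 + b1 ^ 2) * (a0 ^ 2 + b0 ^ 2) * / (K * K)); [apply Rmult_le_compat_r; lra| nra].
Qed.

(* The Wronskian [W n] tends to [Im lam * Series v <> 0], yet [wronskian_sq_le] squeezes it to 0. *)
Theorem not_ex_series_nonreal : Im lam <> 0 -> ~ ex_series v.
Proof.
  intros Hb Hex.
  assert (Hv0 : forall n, 0 <= v n).
  { intros n. unfold v. apply Rdiv_le_0_compat; [apply pow2_ge_0| apply hnorm_pos; auto]. }
  set (Sv := Series v).
  assert (HS : 1 <= Sv).
  { assert (X := sum_f_R0_le_Series v Hv0 Hex 0). simpl sum_f_R0 in X.
    assert (E : v 0%nat = 1) by (unfold v, P; rewrite hatP_0, Cmod_1; unfold hnorm; simpl; field).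
    unfold Sv. lra. }
  assert (L1 : is_lim_seq W (Im lam * Sv)).
  { apply is_lim_seq_ext with (fun n => Im lam * sum_f_R0 v n); [intros; apply green_identity|].
    apply (is_lim_seq_scal_l _ (Im lam) Sv). apply is_lim_sum_f_R0_Series; auto. }
  assert (L2 : is_lim_seq (fun n => W n ^ 2) ((Im lam * Sv) ^ 2)).
  { apply is_lim_seq_ext with (fun n => W n * (W n * 1)); [intros; reflexivity|].
    apply is_lim_seq_mult'; auto. apply is_lim_seq_mult'; auto. apply is_lim_seq_const. }
  assert (L3 : is_lim_seq (fun n => c * (v (S n) * v n)) 0).
  { replace 0 with (c * (0 * 0)) by ring.
    apply is_lim_seq_mult'; [apply is_lim_seq_const|]. apply is_lim_seq_mult'.
    - apply (is_lim_seq_incr_1 v 0). apply ex_series_lim_0; auto.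
    - apply ex_series_lim_0; auto. }
  assert (B := is_lim_seq_le _ _ _ _ wronskian_sq_le L2 L3). simpl in B.
  assert (0 < (Im lam * Sv) ^ 2).
  { apply pow2_gt_0. apply Rmult_integral_contrapositive_currified; auto. lra. }
  lra.
Qed.

End NonReal.

(** * The vectors [v_lambda] *)

Lemma Cmod_Cpown_Ci n : Cmod (Cpown Ci n) = 1.
Proof. induction n; simpl; [apply Cmod_1|]. rewrite Cmod_mult, IHn, Cmod_Ci. ring. Qed.

Lemma hatPr_mass_sq_div_hnorm c Q y n : 0 < Q < 1 -> 0 < c ->
  hatPr c Q n (c * Q ^ y) ^ 2 / hnorm c Q n = charlier_weight Q c n * charlier_poly Q c y n ^ 2.
Proof.
  intros HQ Hc.
  rewrite (hatPr_mass c Q y n HQ). unfold charlier_weight, charlier_poly, hnorm.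
  assert (P := qpochQ_pos Q n HQ). assert (T := qtri_pos Q n (proj1 HQ)).
  rewrite (pow_inv c n). field. repeat split; try lra. apply pow_nonzero; lra.
Qed.

Section Specialization.
Variables (q sigma : R).
Hypothesis hq0 : 0 < q.
Hypothesis hq1 : q < 1.
Let c := Rpower q (2 * sigma).
Let Q := q ^ 2.

Lemma q2_bounds : 0 < Q < 1.
Proof. unfold Q. split; [apply pow_lt; lra|]. simpl. nra. Qed.

Lemma c_pos : 0 < c.
Proof. apply exp_pos. Qed.

Lemma Rpower_q_2 : Rpower q 2 = Q.
Proof. unfold Q. rewrite <- Rpower_pow by auto. replace (INR 2) with 2 by (simpl; ring). reflexivity. Qed.

Lemma Rpower_q_2x x : Rpower q (2 * INR x) = Q ^ x.
Proof. rewrite <- Rpower_q_2, <- Rpower_pow by apply exp_pos. rewrite Rpower_mult. reflexivity. Qed.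

Lemma Rpower_q_mass x : Rpower q (2 * sigma + 2 * INR x) = c * Q ^ x.
Proof. rewrite Rpower_plus, Rpower_q_2x. reflexivity. Qed.

Lemma Rpower_q_opp : Rpower q (- 2 * sigma) = / c.
Proof. unfold c. rewrite <- Rpower_Ropp. f_equal. ring. Qed.

Lemma inv_q_pow_2x x : / q ^ (2 * x) = (/ Q) ^ x.
Proof. unfold Q. rewrite pow_mult, pow_inv. reflexivity. Qed.

Lemma vnorm2_term_hatP lam n : vnorm2_term q sigma lam n = Cmod (hatP c 1 Q n lam) ^ 2 / hnorm c Q n.
Proof.
  unfold vnorm2_term, phi_n. fold c Q.
  rewrite !Cmod_mult, Cmod_Cpown_Ci, Cmod_R, Rmult_1_l, Rpow_mult_distr, pow2_abs.
  set (r := Rpower q (- sigma * INR n) * Rpower q (- (INR n * (INR n - 1)) / 2) / sqrt (qpoch Q Q n)).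
  enough (Hr : r ^ 2 = / hnorm c Q n) by (rewrite Hr; unfold Rdiv; ring).
  assert (P := qpochQ_pos Q n q2_bounds). assert (Hc := c_pos).
  assert (Hs : sqrt (qpoch Q Q n) ^ 2 = qpoch Q Q n) by (rewrite <- Rsqr_pow2; apply Rsqr_sqrt; lra).
  assert (Hsq : forall a, Rpower q a ^ 2 = Rpower q (2 * a))
    by (intros a; simpl; rewrite Rmult_1_r, <- Rpower_plus; f_equal; ring).
  unfold r, Rdiv. rewrite !Rpow_mult_distr, pow_inv, Hs, !Hsq.
  replace (2 * (- sigma * INR n)) with (- (2 * sigma * INR n)) by ring.
  replace (2 * (- (INR n * (INR n - 1)) * / 2)) with (- INR (n * (n - 1))).
  2:{ destruct n; [simpl; field|]. replace (S n - 1)%nat with n by lia. rewrite mult_INR, S_INR. field. }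
  rewrite !Rpower_Ropp, (Rpower_pow (n * (n - 1))) by auto.
  rewrite <- Rpower_mult, Rpower_pow by apply exp_pos.
  fold c. unfold hnorm, Q. rewrite qtri_pow2. fold Q. field.
  split; [lra|]. split; apply pow_nonzero; lra.
Qed.

Lemma vnorm2_term_pos_mass x n : vnorm2_term q sigma (RtoC (c * Q ^ x)) n
  = charlier_weight Q c n * charlier_poly Q c x n ^ 2.
Proof.
  rewrite vnorm2_term_hatP, hatP_hatPr, Cmod_R, pow2_abs by apply q2_bounds.
  apply hatPr_mass_sq_div_hnorm; [apply q2_bounds| apply c_pos].
Qed.

Lemma vnorm2_term_neg_mass x n : vnorm2_term q sigma (RtoC (- Q ^ x)) n
  = charlier_weight Q (/ c) n * charlier_poly Q (/ c) x n ^ 2.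
Proof.
  assert (HQ := q2_bounds). assert (Hc := c_pos).
  rewrite vnorm2_term_hatP, hatP_hatPr, Cmod_R, pow2_abs, hatPr_opp by (auto || lra).
  rewrite <- hatPr_mass_sq_div_hnorm by (auto; apply Rinv_0_lt_compat; auto).
  replace (Q ^ x / c) with (/ c * Q ^ x) by (unfold Rdiv; ring).
  unfold hnorm. rewrite Rpow_mult_distr, (pow_inv c n).
  replace (((- c) ^ n) ^ 2) with ((c ^ n) ^ 2)
    by (rewrite <- !pow_mult, !(Nat.mul_comm n 2), !pow_mult; f_equal; ring).
  assert (P := qpochQ_pos Q n HQ). assert (T := qtri_pos Q n (proj1 HQ)).
  assert (0 < c ^ n) by (apply pow_lt; auto).
  field. repeat split; lra.
Qed.

Lemma Rpower_q_opp_n n : Rpower q (- 2 * sigma * INR n) = (/ c) ^ n.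
Proof. rewrite <- Rpower_q_opp, <- Rpower_pow, Rpower_mult by apply exp_pos. reflexivity. Qed.

Lemma charlier_term_eq x n :
  q ^ (n * (n - 1)) * Rpower q (- 2 * sigma * INR n) / qpoch (q ^ 2) (q ^ 2) n
  * (phi21_trunc (/ q ^ (2 * x)) (/ q ^ (2 * n)) 0 (q ^ 2) (- Rpower q (2 + 2 * sigma + 2 * INR x)) n) ^ 2
  = charlier_weight Q c n * charlier_poly Q c x n ^ 2.
Proof.
  unfold charlier_weight, charlier_poly. fold Q. rewrite !inv_q_pow_2x, Rpower_q_opp_n.
  replace (2 + 2 * sigma + 2 * INR x) with (2 + (2 * sigma + 2 * INR x)) by ring.
  rewrite Rpower_plus, Rpower_q_2, Rpower_q_mass, <- qtri_pow2. fold Q.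
  unfold Rdiv. ring.
Qed.

Lemma positive_mass_value x :
  / q ^ (2 * x) * qpoch (q ^ 2) (q ^ 2) x * qpoch (- Rpower q (2 * sigma + 2)) (q ^ 2) x
    * qpoch_inf (- Rpower q (- 2 * sigma)) (q ^ 2)
  = (/ Q) ^ x * qpoch Q Q x * qpoch (- (c * Q)) Q x * euler_sum Q (/ c).
Proof.
  fold Q. rewrite inv_q_pow_2x, Rpower_plus, Rpower_q_2, Rpower_q_opp, qpoch_inf_euler_sum
    by apply q2_bounds.
  reflexivity.
Qed.

Lemma negative_mass_value x :
  / q ^ (2 * x) * qpoch (q ^ 2) (q ^ 2) x * qpoch (- Rpower q (2 - 2 * sigma)) (q ^ 2) x
    * qpoch_inf (- Rpower q (2 * sigma)) (q ^ 2)
  = (/ Q) ^ x * qpoch Q Q x * qpoch (- (/ c * Q)) Q x * euler_sum Q (/ / c).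
Proof.
  fold Q c. rewrite inv_q_pow_2x, Rinv_inv, qpoch_inf_euler_sum by apply q2_bounds.
  replace (2 - 2 * sigma) with (2 + - 2 * sigma) by ring.
  rewrite Rpower_plus, Rpower_q_2, Rpower_q_opp, Rmult_comm with (r1 := Q). reflexivity.
Qed.

Lemma positive_mass_norm x :
  let lam := RtoC (Rpower q (2 * sigma + 2 * INR x)) in
  let val := / q ^ (2 * x) * qpoch (q ^ 2) (q ^ 2) x
             * qpoch (- Rpower q (2 * sigma + 2)) (q ^ 2) x
             * qpoch_inf (- Rpower q (- 2 * sigma)) (q ^ 2) in
  is_series (vnorm2_term q sigma lam) val /\
  is_series (fun n : nat =>
     q ^ (n * (n - 1)) * Rpower q (- 2 * sigma * INR n) / qpoch (q ^ 2) (q ^ 2) n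
     * (phi21_trunc (/ q ^ (2 * x)) (/ q ^ (2 * n)) 0 (q ^ 2)
          (- Rpower q (2 + 2 * sigma + 2 * INR x)) n) ^ 2) val.
Proof.
  cbv zeta. rewrite Rpower_q_mass, positive_mass_value.
  assert (Hnorm := is_series_charlier_norm Q c x q2_bounds c_pos).
  split.
  - apply is_series_ext_R with (2 := Hnorm). intros n. symmetry. apply vnorm2_term_pos_mass.
  - apply is_series_ext_R with (2 := Hnorm). intros n. symmetry. apply charlier_term_eq.
Qed.

Lemma negative_mass_norm x :
  is_series (vnorm2_term q sigma (RtoC (- q ^ (2 * x))))
    (/ q ^ (2 * x) * qpoch (q ^ 2) (q ^ 2) x
     * qpoch (- Rpower q (2 - 2 * sigma)) (q ^ 2) x
     * qpoch_inf (- Rpower q (2 * sigma)) (q ^ 2)).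
Proof.
  rewrite negative_mass_value, pow_mult. fold Q.
  apply is_series_ext_R with (2 := is_series_charlier_norm Q (/ c) x q2_bounds (Rinv_0_lt_compat _ c_pos)).
  intros n. symmetry. apply vnorm2_term_neg_mass.
Qed.

Lemma v_not_in_l2 lam : lam <> RtoC 0 ->
  (forall x : nat, lam <> RtoC (- q ^ (2 * x))) ->
  (forall x : nat, lam <> RtoC (Rpower q (2 * sigma + 2 * INR x))) ->
  ~ v_in_l2 q sigma lam.
Proof.
  intros H0 Hneg Hpos Hl2. unfold v_in_l2 in Hl2.
  assert (Hex := ex_series_ext _ _ (vnorm2_term_hatP lam) Hl2).
  destruct (Req_dec (Im lam) 0) as [Him|Him].
  - set (r := Re lam).
    assert (Hlam : lam = RtoC r) by (apply injective_projections; simpl; [reflexivity| exact Him]).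
    apply (not_ex_series_real c Q r q2_bounds c_pos).
    + intros E. apply H0. rewrite Hlam, E. reflexivity.
    + intros i E. apply (Hneg i). rewrite Hlam, E, pow_mult. reflexivity.
    + intros i E. apply (Hpos i). rewrite Hlam, E, Rpower_q_mass. reflexivity.
    + revert Hex. apply ex_series_ext. intros n.
      rewrite Hlam, hatP_hatPr, Cmod_R, pow2_abs by apply q2_bounds. reflexivity.
  - exact (not_ex_series_nonreal c Q lam q2_bounds c_pos Him Hex).
Qed.

End Specialization.

Theorem mainTheorem2 (q sigma : R) (hq0 : 0 < q) (hq1 : q < 1) :
  (forall x : nat,
     let lam := RtoC (Rpower q (2 * sigma + 2 * INR x)) in
     let val := / q ^ (2 * x) * qpoch (q ^ 2) (q ^ 2) x
                * qpoch (- Rpower q (2 * sigma + 2)) (q ^ 2) x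
                * qpoch_inf (- Rpower q (- 2 * sigma)) (q ^ 2) in
     is_series (vnorm2_term q sigma lam) val /\
     is_series (fun n : nat =>
        q ^ (n * (n - 1)) * Rpower q (- 2 * sigma * INR n) / qpoch (q ^ 2) (q ^ 2) n
        * (phi21_trunc (/ q ^ (2 * x)) (/ q ^ (2 * n)) 0 (q ^ 2)
             (- Rpower q (2 + 2 * sigma + 2 * INR x)) n) ^ 2) val) /\
  (forall x : nat,
     is_series (vnorm2_term q sigma (RtoC (- q ^ (2 * x))))
       (/ q ^ (2 * x) * qpoch (q ^ 2) (q ^ 2) x
        * qpoch (- Rpower q (2 - 2 * sigma)) (q ^ 2) x
        * qpoch_inf (- Rpower q (2 * sigma)) (q ^ 2))) /\
  (forall lam : C, lam <> RtoC 0 ->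
     (forall x : nat, lam <> RtoC (- q ^ (2 * x))) ->
     (forall x : nat, lam <> RtoC (Rpower q (2 * sigma + 2 * INR x))) ->
     ~ v_in_l2 q sigma lam).
Proof.
  split; [|split].
  - apply positive_mass_norm; assumption.
  - apply negative_mass_norm; assumption.
  - apply v_not_in_l2; assumption.
Qed.
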